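(* Let $p>2$ be real with $2n\le p\le 2n+1$ for some $n\in\mathbb{N}$, and let $u(x)=e^{ix^p}$, $x\in\mathbb{R}$, where for $x<0$ we set $x^p=e^{i\pi p}|x|^p$ (so $u\in\mathscr{S}'(\mathbb{R})$). Then $$WF(u)\subseteq\{0\}\times(\mathbb{R}\setminus\{0\}).$$
   Context: $WF$ is the Gabor wave front set: for $u\in\mathscr{S}'(\mathbb{R})$, $z_0\in T^*\mathbb{R}\setminus\{0\}$ is not in $WF(u)$ iff there is an open conic set $\Gamma\ni z_0$ with $\sup_{z\in\Gamma}\langle z\rangle^N|V_\varphi u(z)|<\infty$ for all $N\ge0$, where $V_\varphi u(x,\xi)=\int u(y)\overline{\varphi(y-x)}e^{-iy\xi}dy$, $\varphi\in\mathscr{S}(\mathbb{R})\setminus\{0\}$, $\langle z\rangle=(1+|z|^2)^{1/2}$. *)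

From Stdlib Require Import Reals Lra ClassicalEpsilon.
Open Scope R_scope.

Definition Cx := (R * R)%type.
Definition C0 : Cx := (0, 0).
Definition Cadd (z w : Cx) : Cx := (fst z + fst w, snd z + snd w).
Definition Cmul (z w : Cx) : Cx :=
  (fst z * fst w - snd z * snd w, fst z * snd w + snd z * fst w).
Definition Cconj (z : Cx) : Cx := (fst z, - snd z).
Definition Ci : Cx := (0, 1).
Definition Cnorm (z : Cx) : R := sqrt (fst z ^ 2 + snd z ^ 2).
Definition Cexp (z : Cx) : Cx := (exp (fst z) * cos (snd z), exp (fst z) * sin (snd z)).

Definition improper_int (f : R -> R) (l : R) : Prop :=
  forall eps, 0 < eps -> exists M, forall a b, a <= - M -> M <= b ->
    exists pr : Riemann_integrable f a b, Rabs (RiemannInt pr - l) < eps.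

Definition Rint (f : R -> R) : R :=
  epsilon (inhabits 0) (fun l => improper_int f l).

Definition Cint (f : R -> Cx) : Cx :=
  (Rint (fun y => fst (f y)), Rint (fun y => snd (f y))).

Definition is_schwartz_R (f : R -> R) : Prop :=
  exists D : nat -> R -> R,
    (forall x, D O x = f x) /\
    (forall k x, derivable_pt_lim (D k) x (D (S k) x)) /\
    (forall (a k : nat), exists K, forall x, Rabs (x ^ a * D k x) <= K).

Definition is_schwartz (phi : R -> Cx) : Prop :=
  is_schwartz_R (fun x => fst (phi x)) /\ is_schwartz_R (fun x => snd (phi x)).

Definition STFT (phi u : R -> Cx) (x xi : R) : Cx :=
  Cint (fun y => Cmul (Cmul (u y) (Cconj (phi (y - x)))) (Cexp (0, - (y * xi)))).

Definition japan (x xi : R) : R := sqrt (1 + (x ^ 2 + xi ^ 2)).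

Definition open_conic (G : R -> R -> Prop) : Prop :=
  (forall x xi, G x xi -> (x, xi) <> (0, 0)) /\
  (forall x xi, G x xi -> exists eps, 0 < eps /\
     forall y eta, (y - x) ^ 2 + (eta - xi) ^ 2 < eps ^ 2 -> G y eta) /\
  (forall x xi t, G x xi -> 0 < t -> G (t * x) (t * xi)).

Definition in_WF (phi u : R -> Cx) (x0 xi0 : R) : Prop :=
  (x0, xi0) <> (0, 0) /\
  ~ (exists G : R -> R -> Prop, open_conic G /\ G x0 xi0 /\
       forall N, 0 <= N -> exists K, forall x xi, G x xi ->
         Rpower (japan x xi) N * Cnorm (STFT phi u x xi) <= K).

Definition cpow (p x : R) : Cx :=
  if Rlt_dec 0 x then (Rpower x p, 0)
  else if Rlt_dec x 0 then Cmul (Cexp (0, PI * p)) (Rpower (- x) p, 0)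
  else C0.

Definition u_p (p : R) (x : R) : Cx := Cexp (Cmul Ci (cpow p x)).

(* Only points with [x0 <> 0] have to be excluded, and for them the cone
   [|xi| < c |x|] over the half-line of [x0] works.  Split the integral
   [V_phi u (x, xi) = int u(y) conj(phi(y - x)) e^{-i y xi} dy] at the dyadic window
   [|x|/2 <= |y| <= 2|x|].  Outside it [|y - x| >= |x|/2], so the Schwartz decay of
   [phi] makes that part [O(|x|^-L)].  Inside it, for [x > 0] the integrand is
   [e^{i theta(y)} conj(phi(y - x))] with [theta(y) = y^p - y xi]; since [p > 2] and
   [|xi| <= c |x|], [|theta'(y)| >= (p/2) |y|^(p-1)] once [|x|] is large, and each
   integration by parts gains a factor [|x|^-1].  For [x < 0],
   [u(y) = exp (i cos(pi p) |y|^p - sin(pi p) |y|^p)] with [sin(pi p) >= 0] because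
   [2n <= p <= 2n+1]: either the damping factor decays exponentially, or
   [cos(pi p) = +-1] and the same non-stationary phase argument applies.  On the
   cone, [<(x, xi)>] is comparable to [1 + |x|]. *)

From Coquelicot Require Import Coquelicot.
From Stdlib Require Import Reals Lra Lia ClassicalEpsilon.
Open Scope R_scope.

Lemma is_derive_eq (f : R -> R) (x l l' : R) : is_derive f x l -> l = l' -> is_derive f x l'.
Proof. intros H ->; exact H. Qed.

Lemma is_derive_Rmult (f g : R -> R) (x df dg : R) : is_derive f x df -> is_derive g x dg ->
  is_derive (fun t => f t * g t) x (df * g x + f x * dg).
Proof. intros. apply (is_derive_mult f g); auto. intros; apply Rmult_comm. Qed.

Lemma is_derive_Rplus (f g : R -> R) (x df dg : R) : is_derive f x df -> is_derive g x dg ->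
  is_derive (fun t => f t + g t) x (df + dg).
Proof. intros. apply (is_derive_plus f g); auto. Qed.

Lemma is_derive_Rminus (f g : R -> R) (x df dg : R) : is_derive f x df -> is_derive g x dg ->
  is_derive (fun t => f t - g t) x (df - dg).
Proof. intros. apply (is_derive_minus f g); auto. Qed.

Lemma is_derive_Rcomp (f g : R -> R) x df dg : is_derive f (g x) df -> is_derive g x dg ->
  is_derive (fun t => f (g t)) x (dg * df).
Proof. intros. apply (is_derive_comp f g); auto. Qed.

Lemma is_derive_Rpower_base y a : 0 < y -> is_derive (fun t => Rpower t a) y (a * Rpower y (a - 1)).
Proof. intros. apply is_derive_Reals, derivable_pt_lim_power; auto. Qed.

Lemma is_derive_shift (f : R -> R) x y l : is_derive f (y - x) l -> is_derive (fun t => f (t - x)) y l.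
Proof. intros H. apply (is_derive_eq _ _ (1 * l)); [|ring]. apply (is_derive_Rcomp f); auto. auto_derive; auto; ring. Qed.

Lemma ex_derive_continuous_R (f : R -> R) y : ex_derive f y -> continuous f y.
Proof. apply (ex_derive_continuous (K:=R_AbsRing) (V:=R_NormedModule)). Qed.

Lemma continuous_Rplus (f g : R -> R) y : continuous f y -> continuous g y -> continuous (fun t => f t + g t) y.
Proof. intros. apply (continuous_plus (K:=R_AbsRing) (V:=R_NormedModule)); auto. Qed.

Lemma continuous_Rminus (f g : R -> R) y : continuous f y -> continuous g y -> continuous (fun t => f t - g t) y.
Proof. intros. apply (continuous_minus (K:=R_AbsRing) (V:=R_NormedModule) f g); auto. Qed.

Lemma continuous_Rmult (f g : R -> R) y : continuous f y -> continuous g y -> continuous (fun t => f t * g t) y.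
Proof. intros. apply (continuous_mult (K:=R_AbsRing) f g); auto. Qed.

Lemma continuous_Ropp (f : R -> R) y : continuous f y -> continuous (fun t => - f t) y.
Proof. intros. apply (continuous_opp (K:=R_AbsRing) (V:=R_NormedModule) f); auto. Qed.

Lemma continuous_shift (f : R -> R) x y : continuous f (y - x) -> continuous (fun t => f (t - x)) y.
Proof.
  intros H. apply (continuous_comp (fun t => t - x) f); auto.
  apply ex_derive_continuous_R. auto_derive. auto.
Qed.

Lemma continuous_Rscal (f : R -> R) k y : continuous f y -> continuous (fun t => k * f t) y.
Proof. intros. apply (continuous_Rmult (fun _ => k)); auto. apply (continuous_const (U:=R_UniformSpace) (V:=R_UniformSpace)). Qed.

Lemma ex_derive_Rmult (f g : R -> R) y : ex_derive f y -> ex_derive g y -> ex_derive (fun t => f t * g t) y.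
Proof. intros [a Ha] [b Hb]. eexists. apply is_derive_Rmult; eauto. Qed.

Lemma ex_derive_Rplus (f g : R -> R) y : ex_derive f y -> ex_derive g y -> ex_derive (fun t => f t + g t) y.
Proof. intros [a Ha] [b Hb]. eexists. apply is_derive_Rplus; eauto. Qed.

Lemma ex_derive_Rminus (f g : R -> R) y : ex_derive f y -> ex_derive g y -> ex_derive (fun t => f t - g t) y.
Proof. intros [a Ha] [b Hb]. eexists. apply is_derive_Rminus; eauto. Qed.

Lemma ex_derive_Rcomp (f g : R -> R) y : ex_derive f (g y) -> ex_derive g y -> ex_derive (fun t => f (g t)) y.
Proof. intros [a Ha] [b Hb]. eexists. apply is_derive_Rcomp; eauto. Qed.

Lemma ex_derive_Rscal (f : R -> R) k y : ex_derive f y -> ex_derive (fun t => k * f t) y.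
Proof. intros [a Ha]. eexists. apply is_derive_scal; eauto. Qed.

Lemma RInt_Rplus (f g : R -> R) a b : ex_RInt f a b -> ex_RInt g a b ->
  RInt (fun x => f x + g x) a b = RInt f a b + RInt g a b.
Proof. intros. apply (RInt_plus f g); auto. Qed.

Lemma RInt_Rminus (f g : R -> R) a b : ex_RInt f a b -> ex_RInt g a b ->
  RInt (fun x => f x - g x) a b = RInt f a b - RInt g a b.
Proof. intros. apply (RInt_minus f g); auto. Qed.

Lemma RInt_ext_R (f g : R -> R) a b : (forall x, Rmin a b < x < Rmax a b -> f x = g x) ->
  RInt f a b = RInt g a b.
Proof. apply RInt_ext. Qed.

Lemma RInt_Rscal (f : R -> R) a b l : ex_RInt f a b -> RInt (fun x => l * f x) a b = l * RInt f a b.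
Proof. intros. apply (RInt_scal f); auto. Qed.

Lemma ex_RInt_Rscal (f : R -> R) a b l : ex_RInt f a b -> ex_RInt (fun x => l * f x) a b.
Proof. intros. apply (ex_RInt_scal (V:=R_NormedModule)); auto. Qed.

Lemma ex_RInt_Rminus (f g : R -> R) a b : ex_RInt f a b -> ex_RInt g a b -> ex_RInt (fun x => f x - g x) a b.
Proof. intros. apply (ex_RInt_minus (V:=R_NormedModule)); auto. Qed.

Lemma ex_RInt_continuous_R (f : R -> R) a b : (forall y, continuous f y) -> ex_RInt f a b.
Proof. intros H. apply (ex_RInt_continuous (V:=R_CompleteNormedModule)). intros; apply H. Qed.

Lemma Rabs_sqr_one e : e * e = 1 -> Rabs e = 1.
Proof. intros H. unfold Rabs. destruct (Rcase_abs e); nra. Qed.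

Lemma exp_le_compat x y : x <= y -> exp x <= exp y.
Proof. intros [H | ->]; [left; apply exp_increasing | right]; auto. Qed.

Lemma Rpower_gt_0 r a : 0 < Rpower r a.
Proof. apply exp_pos. Qed.

Lemma Rpower_le_window X r m : 0 < X -> X / 2 <= r <= 2 * X -> Rpower r m <= Rpower 2 (Rabs m) * Rpower X m.
Proof.
  intros HX [H1 H2]. unfold Rpower. rewrite <- exp_plus. apply exp_le_compat.
  assert (L1 : ln r <= ln 2 + ln X) by (rewrite <- ln_mult by lra; apply ln_le; lra).
  assert (L2 : ln X - ln 2 <= ln r).
  { replace (ln X - ln 2) with (ln (X / 2)) by (unfold Rdiv; rewrite ln_mult, ln_Rinv by lra; ring).
    apply ln_le; lra. }
  assert (L3 : 0 <= ln 2) by (rewrite <- ln_1; apply ln_le; lra).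
  unfold Rabs; destruct (Rcase_abs m); nra.
Qed.

Lemma sin_sub_PI2 z : sin (z - PI / 2) = - cos z.
Proof. rewrite sin_minus, sin_PI2, cos_PI2. ring. Qed.

Lemma Rabs_cos_mult_le u v B : Rabs v <= B -> Rabs (cos u * v) <= B.
Proof.
  intros H. rewrite Rabs_mult. pose proof (Rabs_pos v).
  assert (Rabs (cos u) <= 1) by (apply Rabs_le, COS_bound). nra.
Qed.

Lemma Rabs_five_terms_le A B u v w s1 s2 : Rabs (A - B - (s1 * u - s2 * v + w)) <=
  Rabs A + Rabs B + Rabs s1 * Rabs u + Rabs s2 * Rabs v + Rabs w.
Proof.
  rewrite <- !Rabs_mult. unfold Rminus.
  pose proof (Rabs_triang (A + - B) (- (s1 * u + - (s2 * v) + w))). pose proof (Rabs_triang A (- B)).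
  pose proof (Rabs_triang (s1 * u + - (s2 * v)) w). pose proof (Rabs_triang (s1 * u) (- (s2 * v))).
  repeat rewrite Rabs_Ropp in *. lra.
Qed.

Lemma cos_sub_PI2 z : cos (z - PI / 2) = sin z.
Proof. rewrite cos_minus, sin_PI2, cos_PI2. ring. Qed.

Definition rapid_decay (f : R -> R) := forall L : nat, exists K, forall t, Rabs (f t) * Rabs t ^ L <= K.

Lemma schwartz_R_derivatives f : is_schwartz_R f -> exists D : nat -> R -> R,
  (forall y, D O y = f y) /\ (forall k y, is_derive (D k) y (D (S k) y)) /\ (forall k, rapid_decay (D k)).
Proof.
  intros [D [H0 [H1 H2]]]. exists D. split; [auto | split].
  - intros; apply is_derive_Reals; auto.
  - intros k L. destruct (H2 L k) as [K HK]. exists K. intros t. specialize (HK t).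
    rewrite Rabs_mult, <- RPow_abs in HK. lra.
Qed.

Lemma one_plus_sqr_pos t : 0 < 1 + t ^ 2.
Proof. pose proof (pow2_ge_0 t). lra. Qed.

Lemma lorentzian_le B t : 0 <= B -> B / (1 + t ^ 2) <= B.
Proof.
  intros HB. pose proof (pow2_ge_0 t). unfold Rdiv.
  assert (/ (1 + t ^ 2) <= 1) by (rewrite <- Rinv_1; apply Rinv_le_contravar; lra). nra.
Qed.

Lemma rapid_decay_weight f (L : nat) : rapid_decay f ->
  exists K, 0 <= K /\ forall t, Rabs (f t) * (1 + t ^ 2) * Rabs t ^ L <= K.
Proof.
  intros H. destruct (H L) as [K0 H0]. destruct (H (L + 2)%nat) as [K2 H2].
  exists (K0 + K2). split.
  - specialize (H0 0); specialize (H2 0). rewrite Rabs_R0, pow_ne_zero in H2 by lia.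
    pose proof (Rabs_pos (f 0)). pose proof (pow_le (Rabs 0) L (Rabs_pos 0)). nra.
  - intros t. specialize (H0 t); specialize (H2 t).
    rewrite pow_add in H2. replace (Rabs t ^ 2) with (t ^ 2) in H2 by (symmetry; apply pow2_abs). nra.
Qed.

Lemma rapid_decay_lorentzian f : rapid_decay f -> exists B, 0 <= B /\ forall t, Rabs (f t) <= B / (1 + t ^ 2).
Proof.
  intros H. destruct (rapid_decay_weight f 0 H) as [B [HB HK]]. exists B. split; auto.
  intros t. specialize (HK t). pose proof (one_plus_sqr_pos t). simpl in HK.
  apply Rmult_le_reg_r with (1 + t ^ 2); auto. unfold Rdiv. rewrite Rmult_assoc, Rinv_l; lra.
Qed.

Lemma rapid_decay_tail f : rapid_decay f -> forall L : nat, exists K, 0 <= K /\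
  forall t X, 0 < X -> X / 2 <= Rabs t -> Rabs (f t) <= K * Rpower X (- INR L) / (1 + t ^ 2).
Proof.
  intros H L. destruct (rapid_decay_weight f L H) as [K [HK HfK]].
  exists (K * 2 ^ L). split; [apply Rmult_le_pos; [lra | apply pow_le; lra] |].
  intros t X HX Ht. specialize (HfK t).
  assert (P : 0 < (X / 2) ^ L) by (apply pow_lt; lra).
  assert (Q : (X / 2) ^ L <= Rabs t ^ L) by (apply pow_incr; lra).
  pose proof (Rabs_pos (f t)). pose proof (one_plus_sqr_pos t).
  assert (A : Rabs (f t) * (1 + t ^ 2) * (X / 2) ^ L <= K).
  { eapply Rle_trans; [| exact HfK]. apply Rmult_le_compat_l; [nra | auto]. }
  rewrite Rpower_Ropp, Rpower_pow by auto.
  replace (K * 2 ^ L * / X ^ L / (1 + t ^ 2)) with (K / ((1 + t ^ 2) * (X / 2) ^ L))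
    by (unfold Rdiv; rewrite Rpow_mult_distr, pow_inv; field; repeat split; try apply pow_nonzero; lra).
  apply Rmult_le_reg_r with ((1 + t ^ 2) * (X / 2) ^ L); [nra |].
  unfold Rdiv. rewrite Rmult_assoc, Rinv_l by nra. lra.
Qed.

(** * Non-stationary phase on a half-line *)

Section Nonstationary_phase.
Variables (p sg ep : R) (D : nat -> R -> R).
Hypothesis hp : 2 < p.
Hypothesis hsg : sg * sg = 1.
Hypothesis hep : ep * ep = 1.
Hypothesis hD : forall k y, is_derive (D k) y (D (S k) y).

(* [sg = 1] or [-1] selects the half-line [0 < sg * y], on which the symbol times
   [exp (- i y xi)] will be [exp (i * phase xi y)] for a sign [ep].  [D j] stands for
   the [j]-th derivative of one component of the window, and the amplitudes
   [ampl al k j = |y|^al * phase'^(-k) * D j (y - x)] form a family that is closed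
   under differentiation. *)
Definition phase xi y := ep * Rpower (sg * y) p - y * xi.
Definition phase_deriv xi y := ep * sg * p * Rpower (sg * y) (p - 1) - xi.
Definition ampl al k j x xi y := Rpower (sg * y) al * (/ phase_deriv xi y) ^ k * D j (y - x).
Definition osc_int s xi (f : R -> R) a b := RInt (fun y => cos (phase xi y + s) * f y) a b.

Lemma is_derive_sg_Rpower y al : 0 < sg * y ->
  is_derive (fun t => Rpower (sg * t) al) y (sg * (al * Rpower (sg * y) (al - 1))).
Proof.
  intros H. apply (is_derive_Rcomp (fun z => Rpower z al) (fun t => sg * t)).
  - apply is_derive_Rpower_base; auto.
  - auto_derive; auto; ring.
Qed.

Lemma is_derive_phase xi y : 0 < sg * y -> is_derive (phase xi) y (phase_deriv xi y).
Proof.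
  intros H. unfold phase, phase_deriv. eapply is_derive_eq.
  - apply is_derive_Rminus; [apply is_derive_scal, is_derive_sg_Rpower; auto |].
    auto_derive; auto.
  - ring.
Qed.

Lemma is_derive_phase_deriv xi y : 0 < sg * y ->
  is_derive (phase_deriv xi) y (ep * p * (p - 1) * Rpower (sg * y) (p - 2)).
Proof.
  intros H. unfold phase_deriv. eapply is_derive_eq.
  - apply is_derive_Rminus; [apply is_derive_scal, is_derive_sg_Rpower; auto |].
    auto_derive; auto.
  - replace (p - 1 - 1) with (p - 2) by ring.
    transitivity (ep * p * (p - 1) * Rpower (sg * y) (p - 2) * (sg * sg)); [ring |].
    rewrite hsg; ring.
Qed.

Lemma is_derive_ampl al k j x xi y : 0 < sg * y -> phase_deriv xi y <> 0 ->
  is_derive (ampl al k j x xi) y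
   (al * sg * ampl (al - 1) k j x xi y - INR k * (ep * p * (p - 1)) * ampl (al + p - 2) (S k) j x xi y
    + ampl al k (S j) x xi y).
Proof.
  intros H Hd. unfold ampl. eapply is_derive_eq.
  - apply is_derive_Rmult; [apply is_derive_Rmult |].
    + apply is_derive_sg_Rpower; auto.
    + apply is_derive_pow, is_derive_inv; [apply is_derive_phase_deriv |]; auto.
    + apply is_derive_shift, hD.
  - replace (al + p - 2) with (al + (p - 2)) by ring. rewrite Rpower_plus.
    destruct k as [|k]; simpl; field; auto.
Qed.

Lemma is_derive_cos_phase_shift s xi y : 0 < sg * y ->
  is_derive (fun t => cos (phase xi t + (s - PI / 2))) y (phase_deriv xi y * cos (phase xi y + s)).
Proof.
  intros H. eapply is_derive_eq.
  - apply (is_derive_Rcomp cos (fun t => phase xi t + (s - PI / 2))); [apply is_derive_cos |].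
    apply is_derive_Rplus; [apply is_derive_phase; auto | auto_derive; auto].
  - replace (phase xi y + (s - PI / 2)) with (phase xi y + s - PI / 2) by ring.
    rewrite sin_sub_PI2. ring.
Qed.

Lemma ex_derive_cos_phase_ampl s xi al k j x y : 0 < sg * y -> phase_deriv xi y <> 0 ->
  ex_derive (fun t => cos (phase xi t + s) * ampl al k j x xi t) y.
Proof.
  intros H Hd. apply ex_derive_Rmult; [| eexists; apply is_derive_ampl; auto].
  apply (ex_derive_Rcomp cos (fun t => phase xi t + s)); [eexists; apply is_derive_cos |].
  apply ex_derive_Rplus; [eexists; apply is_derive_phase; auto | eexists; auto_derive; auto].
Qed.

Definition regular_on xi a b := forall y, Rmin a b <= y <= Rmax a b -> 0 < sg * y /\ phase_deriv xi y <> 0.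

Lemma ex_RInt_cos_phase_ampl s xi a b al k j x : regular_on xi a b ->
  ex_RInt (fun y => cos (phase xi y + s) * ampl al k j x xi y) a b.
Proof.
  intros H. apply (ex_RInt_continuous (V:=R_CompleteNormedModule)). intros z Hz.
  destruct (H z Hz). apply ex_derive_continuous_R, ex_derive_cos_phase_ampl; auto.
Qed.

(* [cos (. + s - PI/2)] is an antiderivative of [cos (. + s)], so integrating by parts
   keeps the oscillating factor in the same family. *)
Lemma osc_int_by_parts s xi a b al k j x : regular_on xi a b ->
  osc_int s xi (ampl al k j x xi) a b =
  cos (phase xi b + (s - PI / 2)) * ampl al (S k) j x xi b
  - cos (phase xi a + (s - PI / 2)) * ampl al (S k) j x xi a
  - (al * sg * osc_int (s - PI / 2) xi (ampl (al - 1) (S k) j x xi) a b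
     - INR (S k) * (ep * p * (p - 1)) * osc_int (s - PI / 2) xi (ampl (al + p - 2) (S (S k)) j x xi) a b
     + osc_int (s - PI / 2) xi (ampl al (S k) (S j) x xi) a b).
Proof.
  intros H. unfold osc_int. set (s' := s - PI / 2).
  set (F := fun y => cos (phase xi y + s') * ampl al (S k) j x xi y).
  set (Osc := fun al' k' j' y => cos (phase xi y + s') * ampl al' k' j' x xi y).
  set (G := fun y => al * sg * Osc (al - 1) (S k) j y
    - INR (S k) * (ep * p * (p - 1)) * Osc (al + p - 2) (S (S k)) j y + Osc al (S k) (S j) y).
  assert (HI : forall al' k' j', ex_RInt (Osc al' k' j') a b)
    by (intros; apply ex_RInt_cos_phase_ampl; auto).
  assert (K : is_RInt (fun y => cos (phase xi y + s) * ampl al k j x xi y + G y) a b (minus (F b) (F a))).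
  { apply (is_RInt_derive (V:=R_CompleteNormedModule)); intros z Hz; destruct (H z Hz) as [H1 H2].
    - unfold F. eapply is_derive_eq.
      + apply is_derive_Rmult; [apply is_derive_cos_phase_shift | apply is_derive_ampl]; auto.
      + unfold G, Osc, ampl; simpl; field; auto.
    - apply ex_derive_continuous_R. unfold G, Osc.
      apply ex_derive_Rplus; [| apply ex_derive_Rplus; [apply ex_derive_Rminus; apply ex_derive_Rscal |]];
        apply ex_derive_cos_phase_ampl; assumption. }
  apply (is_RInt_unique (V:=R_CompleteNormedModule)) in K.
  assert (HG : ex_RInt G a b).
  { apply (ex_RInt_plus (V:=R_NormedModule)); [apply ex_RInt_Rminus; apply ex_RInt_Rscal |]; apply HI. }
  rewrite RInt_Rplus in K; [| apply ex_RInt_cos_phase_ampl; assumption | exact HG].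
  unfold G in K. rewrite RInt_Rplus, RInt_Rminus, !RInt_Rscal in K.
  2, 3, 7: apply HI.
  2, 3: apply ex_RInt_Rscal, HI.
  2: apply ex_RInt_Rminus; apply ex_RInt_Rscal, HI.
  change (minus (F b) (F a)) with (F b - F a) in K. unfold F, Osc in K. lra.
Qed.

Section Window.
Variables c X0 : R.
Hypothesis hc : 0 <= c.
Hypothesis hX0 : 2 <= X0.
Hypothesis hX : forall r, X0 / 2 <= r -> 2 * c * r <= p / 2 * Rpower r (p - 1).
Hypothesis hD_decay : forall k, rapid_decay (D k).

(* [hX] makes the phase non-stationary beyond [X0 / 2] throughout the cone
   [|xi| <= c |x|].  An admissible interval [a, b] lies in the dyadic window
   [|x|/2 <= |y| <= 2|x|] and its endpoints stay at distance [|x|/2] from [x], so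
   the boundary terms of an integration by parts are small by the decay of [D j]. *)
Definition admissible x xi a b := X0 <= Rabs x /\ Rabs xi <= c * Rabs x /\ a <= b /\
  (forall y, a <= y <= b -> Rabs x / 2 <= sg * y <= 2 * Rabs x) /\
  Rabs x / 2 <= Rabs (a - x) /\ Rabs x / 2 <= Rabs (b - x).

Lemma phase_deriv_lower_bound x xi a b y : admissible x xi a b -> a <= y <= b ->
  p / 2 * Rpower (sg * y) (p - 1) <= Rabs (phase_deriv xi y).
Proof.
  intros (H1 & H2 & H3 & H4 & _) Hy. destruct (H4 y Hy) as [Hy1 Hy2].
  assert (Hr := hX (sg * y) ltac:(lra)).
  pose proof (Rpower_gt_0 (sg * y) (p - 1)).
  assert (E : Rabs (ep * sg * p * Rpower (sg * y) (p - 1)) = p * Rpower (sg * y) (p - 1)).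
  { rewrite !Rabs_mult, (Rabs_sqr_one ep), (Rabs_sqr_one sg), (Rabs_right p), (Rabs_right (Rpower _ _)); lra. }
  pose proof (Rabs_triang_inv (ep * sg * p * Rpower (sg * y) (p - 1)) xi).
  unfold phase_deriv. nra.
Qed.

Lemma admissible_regular x xi a b : admissible x xi a b -> regular_on xi a b.
Proof.
  intros Hc y Hy. pose proof Hc as (H1 & H2 & H3 & H4 & _).
  rewrite Rmin_left, Rmax_right in Hy by lra.
  destruct (H4 y Hy). split; [lra |].
  pose proof (phase_deriv_lower_bound x xi a b y Hc Hy). pose proof (Rpower_gt_0 (sg * y) (p - 1)).
  intro E; rewrite E, Rabs_R0 in H5. nra.
Qed.

Lemma admissible_length x xi a b : admissible x xi a b -> b - a <= 2 * Rabs x.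
Proof.
  intros (H1 & H2 & H3 & H4 & _).
  destruct (H4 a ltac:(lra)), (H4 b ltac:(lra)).
  assert (HH : Rabs (sg * (b - a)) <= 2 * Rabs x) by (apply Rabs_le; lra).
  rewrite Rabs_mult, (Rabs_sqr_one sg), Rabs_right in HH by lra. lra.
Qed.

Lemma ampl_bound x xi a b y al k j : admissible x xi a b -> a <= y <= b ->
  Rabs (ampl al k j x xi y) <=
  (2 / p) ^ k * Rpower 2 (Rabs (al - INR k * (p - 1))) * Rpower (Rabs x) (al - INR k * (p - 1))
  * Rabs (D j (y - x)).
Proof.
  intros Hc Hy. pose proof Hc as (H1 & H2 & H3 & H4 & _). destruct (H4 y Hy) as [Hy1 Hy2].
  pose proof (phase_deriv_lower_bound x xi a b y Hc Hy) as Hd.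
  set (r := sg * y) in *. set (R1 := Rpower r (p - 1)) in *.
  assert (HR1 : 0 < R1) by apply Rpower_gt_0.
  assert (A : Rabs ((/ phase_deriv xi y) ^ k) <= (2 / p) ^ k * Rpower r (- (INR k * (p - 1)))).
  { rewrite <- RPow_abs, Rabs_inv.
    apply Rle_trans with ((/ (p / 2 * R1)) ^ k).
    - apply pow_incr. split; [left; apply Rinv_0_lt_compat; nra | apply Rinv_le_contravar; nra].
    - assert (E : Rpower r (INR k * (p - 1)) = R1 ^ k).
      { rewrite Rmult_comm, <- Rpower_mult. apply Rpower_pow, Rpower_gt_0. }
      rewrite Rpower_Ropp, E, Rinv_mult, Rpow_mult_distr, pow_inv, <- !pow_inv.
      replace (/ (p / 2)) with (2 / p) by (field; lra). lra. }
  assert (B : Rpower r al * ((2 / p) ^ k * Rpower r (- (INR k * (p - 1)))) =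
     (2 / p) ^ k * Rpower r (al - INR k * (p - 1))).
  { unfold Rminus. rewrite (Rpower_plus al). ring. }
  assert (W := Rpower_le_window (Rabs x) r (al - INR k * (p - 1)) ltac:(lra) ltac:(lra)).
  unfold ampl. fold r. rewrite !Rabs_mult, (Rabs_right (Rpower r al)) by (left; apply Rpower_gt_0).
  pose proof (Rpower_gt_0 r al). pose proof (pow_le (2 / p) k ltac:(left; apply Rdiv_lt_0_compat; lra)).
  pose proof (Rabs_pos (D j (y - x))). pose proof (Rabs_pos ((/ phase_deriv xi y) ^ k)).
  apply Rle_trans with (Rpower r al * ((2 / p) ^ k * Rpower r (- (INR k * (p - 1)))) * Rabs (D j (y - x))).
  - apply Rmult_le_compat_r; auto. apply Rmult_le_compat_l; lra.
  - rewrite B. apply Rmult_le_compat_r; auto. rewrite Rmult_assoc. apply Rmult_le_compat_l; auto.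
Qed.

Lemma ampl_endpoint_bound j (N : nat) : exists K, 0 <= K /\ forall x xi a b y al k,
  admissible x xi a b -> a <= y <= b -> Rabs x / 2 <= Rabs (y - x) ->
  Rabs (ampl al (S k) j x xi y) <=
  (2 / p) ^ S k * Rpower 2 (Rabs (al - INR (S k) * (p - 1))) * K
  * Rpower (Rabs x) (al - INR k * (p - 1) - INR N).
Proof.
  destruct (rapid_decay_tail (D j) (hD_decay j) N) as [K [HK HT]].
  exists K. split; auto. intros x xi a b y al k Hc Hy Hyx. pose proof Hc as (H1 & _).
  set (c1 := (2 / p) ^ S k * Rpower 2 (Rabs (al - INR (S k) * (p - 1)))).
  assert (Hc1 : 0 <= c1).
  { apply Rmult_le_pos; [apply pow_le, Rlt_le, Rdiv_lt_0_compat | left; apply Rpower_gt_0]; lra. }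
  assert (HDj : Rabs (D j (y - x)) <= K * Rpower (Rabs x) (- INR N)).
  { eapply Rle_trans; [apply (HT (y - x) (Rabs x)); lra |]. apply lorentzian_le.
    apply Rmult_le_pos; [| left; apply Rpower_gt_0]; auto. }
  assert (Hexp : Rpower (Rabs x) (al - INR (S k) * (p - 1)) * Rpower (Rabs x) (- INR N) <=
          Rpower (Rabs x) (al - INR k * (p - 1) - INR N)).
  { rewrite <- Rpower_plus. apply Rle_Rpower; [lra |]. rewrite S_INR. nra. }
  eapply Rle_trans; [apply (ampl_bound x xi a b y al (S k) j Hc Hy) |]. fold c1.
  pose proof (Rpower_gt_0 (Rabs x) (al - INR (S k) * (p - 1))).
  pose proof (Rpower_gt_0 (Rabs x) (- INR N)).
  apply Rle_trans with (c1 * K * (Rpower (Rabs x) (al - INR (S k) * (p - 1)) * Rpower (Rabs x) (- INR N))).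
  - replace (c1 * K * (Rpower (Rabs x) (al - INR (S k) * (p - 1)) * Rpower (Rabs x) (- INR N)))
      with (c1 * Rpower (Rabs x) (al - INR (S k) * (p - 1)) * (K * Rpower (Rabs x) (- INR N))) by ring.
    apply Rmult_le_compat_l; [nra | auto].
  - apply Rmult_le_compat_l; [nra | auto].
Qed.

(* [osc_decay N]: every oscillatory integral of an amplitude over an admissible
   interval is [O(|x|^(1 - N))] relative to the size [|x|^(al - k (p - 1))] of the
   amplitude itself. *)
Definition osc_decay (N : nat) := forall j k al, exists C, 0 <= C /\ forall s x xi a b,
  admissible x xi a b ->
  Rabs (osc_int s xi (ampl al k j x xi) a b) <= C * Rpower (Rabs x) (al - INR k * (p - 1) + 1 - INR N).

Lemma osc_decay_0 : osc_decay 0.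
Proof.
  intros j k al. destruct (rapid_decay_lorentzian _ (hD_decay j)) as [K [HK HDK]].
  set (m := al - INR k * (p - 1)).
  set (C0 := (2 / p) ^ k * Rpower 2 (Rabs m)).
  assert (HC0 : 0 <= C0).
  { apply Rmult_le_pos; [apply pow_le, Rlt_le, Rdiv_lt_0_compat | left; apply Rpower_gt_0]; lra. }
  exists (2 * C0 * K). split; [nra |]. intros s x xi a b Hc. pose proof Hc as (H1 & _ & H3 & _).
  pose proof (admissible_length x xi a b Hc). pose proof (Rpower_gt_0 (Rabs x) m).
  assert (Hpt : forall t, a <= t <= b -> Rabs (cos (phase xi t + s) * ampl al k j x xi t) <= C0 * Rpower (Rabs x) m * K).
  { intros t Ht. apply Rabs_cos_mult_le. eapply Rle_trans; [apply (ampl_bound x xi a b t al k j Hc Ht) |].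
    apply Rmult_le_compat_l; [nra |]. eapply Rle_trans; [apply HDK | apply lorentzian_le; auto]. }
  unfold osc_int. eapply Rle_trans.
  - apply abs_RInt_le_const; [auto | apply ex_RInt_cos_phase_ampl, (admissible_regular x xi a b Hc) | exact Hpt].
  - replace (m + 1 - INR 0) with (m + 1) by (simpl; ring). rewrite Rpower_plus, Rpower_1 by lra.
    assert (0 <= C0 * Rpower (Rabs x) m * K) by (apply Rmult_le_pos; [apply Rmult_le_pos |]; lra). nra.
Qed.

Lemma osc_decay_S N : osc_decay N -> osc_decay (S N).
Proof.
  intros HQ j k al.
  destruct (HQ j (S k) (al - 1)) as [C1 [HC1 Q1]].
  destruct (HQ j (S (S k)) (al + p - 2)) as [C2 [HC2 Q2]].
  destruct (HQ (S j) (S k) al) as [C3 [HC3 Q3]].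
  destruct (ampl_endpoint_bound j N) as [K [HK Hend]].
  set (Cb := (2 / p) ^ S k * Rpower 2 (Rabs (al - INR (S k) * (p - 1))) * K).
  set (Ck := INR (S k) * (p * (p - 1))).
  assert (HCb : 0 <= Cb).
  { apply Rmult_le_pos; [apply Rmult_le_pos; [apply pow_le, Rlt_le, Rdiv_lt_0_compat | left; apply Rpower_gt_0] |]; lra. }
  assert (HCk : 0 <= Ck) by (apply Rmult_le_pos; [apply pos_INR | nra]).
  pose proof (Rabs_pos al).
  exists (2 * Cb + Rabs al * C1 + Ck * C2 + C3). split; [nra |].
  intros s x xi a b Hc. pose proof Hc as (H1 & H2 & H3 & H4 & H5 & H6).
  set (E := Rpower (Rabs x) (al - INR k * (p - 1) + 1 - INR (S N))).
  assert (HE : 0 <= E) by (left; apply Rpower_gt_0).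
  assert (Hexp : forall e C, 0 <= C -> e <= al - INR k * (p - 1) + 1 - INR (S N) ->
    C * Rpower (Rabs x) e <= C * E).
  { intros e C HC He. apply Rmult_le_compat_l; auto. apply Rle_Rpower; lra. }
  assert (B : forall y, y = a \/ y = b -> Rabs (cos (phase xi y + (s - PI / 2)) * ampl al (S k) j x xi y) <= Cb * E).
  { intros y Hy. apply Rabs_cos_mult_le. unfold E, Cb.
    replace (al - INR k * (p - 1) + 1 - INR (S N)) with (al - INR k * (p - 1) - INR N) by (rewrite S_INR; ring).
    apply Hend with a b; auto; destruct Hy; subst; lra. }
  assert (Esg : Rabs (al * sg) = Rabs al) by (rewrite Rabs_mult, (Rabs_sqr_one sg hsg); ring).
  assert (Eep : Rabs (INR (S k) * (ep * p * (p - 1))) = Ck).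
  { unfold Ck. rewrite !Rabs_mult, (Rabs_sqr_one ep hep), (Rabs_right (INR (S k))), (Rabs_right p),
      (Rabs_right (p - 1)) by (try apply Rle_ge, pos_INR; lra). ring. }
  assert (T1 : Rabs (osc_int (s - PI / 2) xi (ampl (al - 1) (S k) j x xi) a b) <= C1 * E).
  { eapply Rle_trans; [apply Q1, Hc | apply Hexp; [auto | rewrite !S_INR; nra]]. }
  assert (T2 : Rabs (osc_int (s - PI / 2) xi (ampl (al + p - 2) (S (S k)) j x xi) a b) <= C2 * E).
  { eapply Rle_trans; [apply Q2, Hc | apply Hexp; [auto | rewrite !S_INR; nra]]. }
  assert (T3 : Rabs (osc_int (s - PI / 2) xi (ampl al (S k) (S j) x xi) a b) <= C3 * E).
  { eapply Rle_trans; [apply Q3, Hc | apply Hexp; [auto | rewrite !S_INR; nra]]. }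
  rewrite osc_int_by_parts by (apply admissible_regular with x; auto).
  eapply Rle_trans; [apply Rabs_five_terms_le |]. rewrite Esg, Eep.
  pose proof (B a (or_introl eq_refl)). pose proof (B b (or_intror eq_refl)).
  pose proof (Rmult_le_compat_l _ _ _ (Rabs_pos al) T1). pose proof (Rmult_le_compat_l _ _ _ HCk T2).
  lra.
Qed.

Lemma osc_decay_all N : osc_decay N.
Proof. induction N; [apply osc_decay_0 | apply osc_decay_S; auto]. Qed.

End Window.
End Nonstationary_phase.

(** * Improper integrals dominated by a Lorentzian *)

Lemma RInt_Chasles_R (f : R -> R) a b c : (forall y, continuous f y) -> RInt f a b + RInt f b c = RInt f a c.
Proof. intros H. apply (RInt_Chasles (V:=R_CompleteNormedModule)); apply ex_RInt_continuous_R; auto. Qed.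

Lemma Rabs_RInt_le_RInt (f g : R -> R) a b : a <= b -> ex_RInt f a b -> ex_RInt g a b ->
  (forall y, a <= y <= b -> Rabs (f y) <= g y) -> Rabs (RInt f a b) <= RInt g a b.
Proof.
  intros Hab Hf Hg H. apply Rabs_le. split.
  - assert (0 <= RInt (fun y => f y + g y) a b).
    { apply RInt_ge_0; auto. apply (ex_RInt_plus (V:=R_NormedModule)); auto.
      intros y Hy. specialize (H y ltac:(lra)). apply Rabs_le_between in H. lra. }
    rewrite RInt_Rplus in H0 by auto. lra.
  - apply RInt_le; auto. intros y Hy. specialize (H y ltac:(lra)). apply Rabs_le_between in H. lra.
Qed.

Lemma continuous_lorentzian B x y : continuous (fun t => B / (1 + (t - x) ^ 2)) y.
Proof. apply ex_derive_continuous_R. auto_derive. pose proof (one_plus_sqr_pos (y - x)). simpl in *. lra. Qed.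

Lemma RInt_lorentzian_le B x a b : 0 <= B -> a <= b -> RInt (fun y => B / (1 + (y - x) ^ 2)) a b <= B * PI.
Proof.
  intros HB Hab.
  assert (K : is_RInt (fun y => B / (1 + (y - x) ^ 2)) a b (minus (B * atan (b - x)) (B * atan (a - x)))).
  { apply (is_RInt_derive (V:=R_CompleteNormedModule) (fun y => B * atan (y - x))).
    - intros z _. pose proof (one_plus_sqr_pos (z - x)). auto_derive; auto. simpl in *. field. lra.
    - intros z _. apply continuous_lorentzian. }
  apply (is_RInt_unique (V:=R_CompleteNormedModule)) in K. rewrite K.
  change (minus (B * atan (b - x)) (B * atan (a - x))) with (B * atan (b - x) - B * atan (a - x)).
  pose proof (atan_bound (b - x)). pose proof (atan_bound (a - x)). nra.
Qed.

Lemma Rabs_RInt_le_lorentzian (f : R -> R) x E a b : (forall y, continuous f y) -> a <= b -> 0 <= E ->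
  (forall y, a <= y <= b -> Rabs (f y) <= E / (1 + (y - x) ^ 2)) -> Rabs (RInt f a b) <= E * PI.
Proof.
  intros Hf Hab HE H. eapply Rle_trans; [apply (Rabs_RInt_le_RInt f (fun y => E / (1 + (y - x) ^ 2))) |].
  - exact Hab.
  - apply ex_RInt_continuous_R; auto.
  - apply ex_RInt_continuous_R, continuous_lorentzian.
  - exact H.
  - apply RInt_lorentzian_le; auto.
Qed.

Definition has_improper_RInt (f : R -> R) l := forall eps, 0 < eps -> exists M, 0 <= M /\
  forall a b, a <= - M -> M <= b -> Rabs (RInt f a b - l) < eps.

(* A nonnegative function with uniformly bounded integrals: the improper integral
   is the sum of the suprema of [RInt h a 0] and [RInt h 0 b]. *)
Lemma has_improper_RInt_nonneg (h : R -> R) S : (forall y, continuous h y) -> (forall y, 0 <= h y) ->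
  (forall a b, a <= b -> RInt h a b <= S) -> exists l, has_improper_RInt h l.
Proof.
  intros Hc Hp HS.
  assert (mono : forall a b, a <= b -> 0 <= RInt h a b)
    by (intros; apply RInt_ge_0; auto using ex_RInt_continuous_R).
  destruct (completeness (fun v => exists b, 0 <= b /\ v = RInt h 0 b)) as [U [HU1 HU2]].
  { exists S. intros v [b [Hb ->]]. apply HS; auto. }
  { exists (RInt h 0 0), 0. split; auto; lra. }
  destruct (completeness (fun v => exists a, a <= 0 /\ v = RInt h a 0)) as [L [HL1 HL2]].
  { exists S. intros v [a [Ha ->]]. apply HS; auto. }
  { exists (RInt h 0 0), 0. split; auto; lra. }
  exists (L + U). intros eps Heps.
  assert (Hb0 : exists b0, 0 <= b0 /\ U - eps / 2 < RInt h 0 b0).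
  { apply NNPP. intro N. assert (U <= U - eps / 2); [| lra]. apply HU2. intros v [b [Hb ->]].
    apply Rnot_lt_le. intro. apply N. exists b. auto. }
  assert (Ha0 : exists a0, a0 <= 0 /\ L - eps / 2 < RInt h a0 0).
  { apply NNPP. intro N. assert (L <= L - eps / 2); [| lra]. apply HL2. intros v [a [Ha ->]].
    apply Rnot_lt_le. intro. apply N. exists a. auto. }
  destruct Hb0 as [b0 [Hb0 Hb0']], Ha0 as [a0 [Ha0 Ha0']].
  exists (Rmax b0 (- a0)). split; [apply Rle_trans with b0; auto; apply Rmax_l |].
  intros a b Ha Hb. pose proof (Rmax_l b0 (- a0)). pose proof (Rmax_r b0 (- a0)).
  rewrite <- (RInt_Chasles_R h a 0 b) by auto.
  assert (RInt h 0 b <= U) by (apply HU1; exists b; split; auto; lra).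
  assert (RInt h a 0 <= L) by (apply HL1; exists a; split; auto; lra).
  assert (RInt h 0 b0 <= RInt h 0 b).
  { rewrite <- (RInt_Chasles_R h 0 b0 b) by auto. pose proof (mono b0 b ltac:(lra)). lra. }
  assert (RInt h a0 0 <= RInt h a 0).
  { rewrite <- (RInt_Chasles_R h a a0 0) by auto. pose proof (mono a a0 ltac:(lra)). lra. }
  apply Rabs_def1; lra.
Qed.

Lemma has_improper_RInt_minus (f g : R -> R) l1 l2 : (forall y, continuous f y) -> (forall y, continuous g y) ->
  has_improper_RInt f l1 -> has_improper_RInt g l2 -> has_improper_RInt (fun y => f y - g y) (l1 - l2).
Proof.
  intros Hf Hg H1 H2 eps Heps.
  destruct (H1 (eps / 2) ltac:(lra)) as [M1 [HM1 K1]], (H2 (eps / 2) ltac:(lra)) as [M2 [HM2 K2]].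
  exists (Rmax M1 M2). split; [apply Rle_trans with M1; auto; apply Rmax_l |].
  intros a b Ha Hb. pose proof (Rmax_l M1 M2). pose proof (Rmax_r M1 M2).
  rewrite RInt_Rminus by auto using ex_RInt_continuous_R.
  specialize (K1 a b ltac:(lra) ltac:(lra)). specialize (K2 a b ltac:(lra) ltac:(lra)).
  apply Rabs_def2 in K1. apply Rabs_def2 in K2. apply Rabs_def1; lra.
Qed.

Lemma has_improper_RInt_lorentzian (f : R -> R) x B : (forall y, continuous f y) ->
  (forall y, Rabs (f y) <= B / (1 + (y - x) ^ 2)) -> exists l, has_improper_RInt f l.
Proof.
  intros Hf HB. set (g := fun y => B / (1 + (y - x) ^ 2)).
  assert (Hg : forall y, continuous g y) by apply continuous_lorentzian.
  assert (B0 : 0 <= B) by (specialize (HB x); pose proof (Rabs_pos (f x)); rewrite Rminus_diag in HB; simpl in HB; lra).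
  assert (Hg0 : forall y, 0 <= g y)
    by (intros y; unfold g, Rdiv; apply Rmult_le_pos; [| left; apply Rinv_0_lt_compat, one_plus_sqr_pos]; auto).
  assert (Hfg : forall y, continuous (fun t => f t + g t) y)
    by (intros y; apply (continuous_plus (K:=R_AbsRing) (V:=R_NormedModule)); auto).
  destruct (has_improper_RInt_nonneg (fun y => f y + g y) (2 * B * PI) Hfg) as [l1 Hl1].
  { intros y. specialize (HB y). apply Rabs_le_between in HB. unfold g. lra. }
  { intros a b Hab. eapply Rle_trans; [apply Rle_abs |]. apply Rabs_RInt_le_lorentzian with x; auto; [lra |].
    intros y _. specialize (HB y). apply Rabs_le_between in HB. unfold g in *.
    rewrite Rabs_right by lra. unfold Rdiv in *. lra. }
  destruct (has_improper_RInt_nonneg g (B * PI) Hg Hg0) as [l2 Hl2].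
  { intros a b Hab. eapply Rle_trans; [apply Rle_abs |]. apply Rabs_RInt_le_lorentzian with x; auto.
    intros y _. rewrite Rabs_right; [unfold g; lra | apply Rle_ge, Hg0]. }
  exists (l1 - l2). intros eps Heps.
  destruct (has_improper_RInt_minus _ _ _ _ Hfg Hg Hl1 Hl2 eps Heps) as [M [HM K]].
  exists M. split; auto. intros a b Ha Hb.
  rewrite (RInt_ext_R f (fun y => f y + g y - g y)) by (intros; ring). auto.
Qed.

Lemma improper_int_of_has_improper_RInt (f : R -> R) l : (forall y, continuous f y) ->
  has_improper_RInt f l -> improper_int f l.
Proof.
  intros Hf H eps Heps. destruct (H eps Heps) as [M [HM K]]. exists M.
  intros a b Ha Hb. exists (ex_RInt_Reals_0 _ _ _ (ex_RInt_continuous_R f a b Hf)).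
  rewrite <- RInt_Reals. apply K; auto.
Qed.

(* If [f] is small outside [[lo, hi]], its (improper) integral [Rint f] is close to
   [RInt f lo hi]; in particular [Rint f] is not a junk value of [epsilon]. *)
Lemma Rint_sub_RInt_le (f : R -> R) x B E lo hi : (forall y, continuous f y) -> lo <= hi -> 0 <= E ->
  (forall y, Rabs (f y) <= B / (1 + (y - x) ^ 2)) ->
  (forall y, y <= lo \/ hi <= y -> Rabs (f y) <= E / (1 + (y - x) ^ 2)) ->
  Rabs (Rint f - RInt f lo hi) <= 8 * E.
Proof.
  intros Hf Hlh HE H1 H2.
  assert (Hr : improper_int f (Rint f)).
  { unfold Rint. apply epsilon_spec. destruct (has_improper_RInt_lorentzian f x B Hf H1) as [l Hl].
    exists l. apply improper_int_of_has_improper_RInt; auto. }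
  apply le_epsilon. intros eps Heps. destruct (Hr eps Heps) as [M HM].
  set (a := Rmin (- Rabs M) lo). set (b := Rmax (Rabs M) hi).
  assert (a <= - M) by (unfold a; pose proof (Rmin_l (- Rabs M) lo); pose proof (Rle_abs M); lra).
  assert (M <= b) by (unfold b; pose proof (Rmax_l (Rabs M) hi); pose proof (Rle_abs M); lra).
  assert (Ha : a <= lo) by apply Rmin_r. assert (Hb : hi <= b) by apply Rmax_r.
  destruct (HM a b) as [pr Hpr]; auto.
  rewrite <- RInt_Reals, <- (RInt_Chasles_R f a lo b), <- (RInt_Chasles_R f lo hi b) in Hpr by auto.
  assert (T1 : Rabs (RInt f a lo) <= E * PI)
    by (apply Rabs_RInt_le_lorentzian with x; auto; intros; apply H2; lra).
  assert (T2 : Rabs (RInt f hi b) <= E * PI)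
    by (apply Rabs_RInt_le_lorentzian with x; auto; intros; apply H2; lra).
  pose proof PI_4. pose proof PI_RGT_0.
  apply Rabs_le_between in T1. apply Rabs_le_between in T2. apply Rabs_def2 in Hpr.
  apply Rabs_le. nra.
Qed.

(** * The symbol [u_p] *)

Lemma Rpower_le_self r q : 0 < r <= 1 -> 1 <= q -> Rpower r q <= r.
Proof.
  intros [H1 H2] H3. unfold Rpower. rewrite <- (exp_ln r) at 2 by auto. apply exp_le_compat.
  assert (ln r <= 0) by (rewrite <- ln_1; apply ln_le; lra). nra.
Qed.

Lemma Rpower_ge_self r q : 1 <= r -> 1 <= q -> r <= Rpower r q.
Proof.
  intros H1 H2. unfold Rpower. rewrite <- (exp_ln r) at 1 by lra. apply exp_le_compat.
  assert (0 <= ln r) by (rewrite <- ln_1; apply ln_le; lra). nra.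
Qed.

Lemma sin_PI_mul_nonneg p n : 2 * INR n <= p <= 2 * INR n + 1 -> 0 <= sin (PI * p).
Proof.
  intros H. replace (PI * p) with (PI * (p - 2 * INR n) + 2 * INR n * PI) by ring.
  rewrite sin_period. pose proof PI_RGT_0. apply sin_ge_0; nra.
Qed.

Lemma continuous_0_of_le_abs (f : R -> R) : f 0 = 0 -> (forall y, Rabs y < 1 -> Rabs (f y) <= Rabs y) ->
  continuous f 0.
Proof.
  intros H0 H. apply continuity_pt_filterlim. intros eps Heps. exists (Rmin 1 eps).
  split; [apply Rmin_pos; lra |]. intros y [_ Hy]. simpl in *. unfold R_dist in *.
  rewrite H0, Rminus_0_r in *. pose proof (Rmin_l 1 eps). pose proof (Rmin_r 1 eps).
  specialize (H y ltac:(lra)). lra.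
Qed.

Lemma u_p_pos p y : 0 < y -> u_p p y = (cos (Rpower y p), sin (Rpower y p)).
Proof.
  intros H. unfold u_p, cpow, Cexp, Cmul, Ci. destruct (Rlt_dec 0 y); [| lra]. simpl.
  replace (0 * Rpower y p - 1 * 0) with 0 by ring. replace (0 * 0 + 1 * Rpower y p) with (Rpower y p) by ring.
  rewrite exp_0, !Rmult_1_l. reflexivity.
Qed.

(* For [y < 0], [(-y)^p e^{i pi p}] has imaginary part [sin (PI p) (-y)^p], which
   turns into a damping factor. *)
Lemma u_p_neg p y : y < 0 -> u_p p y =
  (exp (- (sin (PI * p) * Rpower (- y) p)) * cos (cos (PI * p) * Rpower (- y) p),
   exp (- (sin (PI * p) * Rpower (- y) p)) * sin (cos (PI * p) * Rpower (- y) p)).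
Proof.
  intros H. unfold u_p, cpow. destruct (Rlt_dec 0 y); [lra |]. destruct (Rlt_dec y 0); [| lra].
  unfold Cexp, Cmul, Ci; simpl. rewrite exp_0. f_equal; f_equal; f_equal; ring.
Qed.

Lemma u_p_0 p : u_p p 0 = (1, 0).
Proof.
  unfold u_p, cpow. destruct (Rlt_dec 0 0); [lra |]. destruct (Rlt_dec 0 0); [lra |].
  unfold Cexp, Cmul, Ci, C0; simpl. replace (0 * 0 - 1 * 0) with 0 by ring.
  replace (0 * 0 + 1 * 0) with 0 by ring. rewrite exp_0, cos_0, sin_0. f_equal; ring.
Qed.

Lemma u_p_neg_le p y : y < 0 ->
  Rabs (fst (u_p p y)) <= exp (- (sin (PI * p) * Rpower (- y) p)) /\
  Rabs (snd (u_p p y)) <= exp (- (sin (PI * p) * Rpower (- y) p)).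
Proof.
  intros H. rewrite u_p_neg by auto. simpl. set (w := exp _).
  assert (Hw : 0 < w) by apply exp_pos. rewrite !Rabs_mult, (Rabs_right w) by lra.
  set (t := cos (PI * p) * Rpower (- y) p).
  assert (Rabs (cos t) <= 1) by (apply Rabs_le, COS_bound).
  assert (Rabs (sin t) <= 1) by (apply Rabs_le, SIN_bound).
  pose proof (Rabs_pos (cos t)). pose proof (Rabs_pos (sin t)). split; nra.
Qed.

Lemma u_p_bounded p y : 0 <= sin (PI * p) -> Rabs (fst (u_p p y)) <= 1 /\ Rabs (snd (u_p p y)) <= 1.
Proof.
  intros Hs. destruct (Rtotal_order y 0) as [H | [-> | H]].
  - assert (exp (- (sin (PI * p) * Rpower (- y) p)) <= 1).
    { rewrite <- exp_0. apply exp_le_compat. pose proof (Rpower_gt_0 (- y) p). nra. }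
    destruct (u_p_neg_le p y H). lra.
  - rewrite u_p_0. simpl. rewrite Rabs_R1, Rabs_R0. lra.
  - rewrite u_p_pos by auto. simpl. split; apply Rabs_le; [apply COS_bound | apply SIN_bound].
Qed.

Lemma cpow_le_abs p y : 1 <= p -> Rabs y < 1 ->
  Rabs (fst (cpow p y)) <= Rabs y /\ Rabs (snd (cpow p y)) <= Rabs y.
Proof.
  intros Hp Hy. apply Rabs_def2 in Hy. unfold cpow. destruct (Rlt_dec 0 y) as [H | H]; simpl.
  - rewrite Rabs_R0, Rabs_right, (Rabs_right y) by (try left; try apply Rpower_gt_0; lra).
    split; [apply Rpower_le_self |]; lra.
  - destruct (Rlt_dec y 0) as [H' | H']; simpl.
    + assert (HR : Rpower (- y) p <= - y) by (apply Rpower_le_self; lra).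
      pose proof (Rpower_gt_0 (- y) p). rewrite exp_0, (Rabs_left y) by lra.
      assert (Hc : Rabs (cos (PI * p)) <= 1) by (apply Rabs_le, COS_bound).
      assert (Hs : Rabs (sin (PI * p)) <= 1) by (apply Rabs_le, SIN_bound).
      replace (1 * cos (PI * p) * Rpower (- y) p - 1 * sin (PI * p) * 0) with (cos (PI * p) * Rpower (- y) p) by ring.
      replace (1 * cos (PI * p) * 0 + 1 * sin (PI * p) * Rpower (- y) p) with (sin (PI * p) * Rpower (- y) p) by ring.
      rewrite !Rabs_mult, (Rabs_right (Rpower _ _)) by lra. split; nra.
    + unfold C0; simpl. rewrite Rabs_R0. split; apply Rabs_pos.
Qed.

Lemma cpow_continuous p y : 1 <= p ->
  continuous (fun t => fst (cpow p t)) y /\ continuous (fun t => snd (cpow p t)) y.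
Proof.
  intros Hp. destruct (Rtotal_order y 0) as [H | [-> | H]].
  - assert (E : forall t, t < 0 -> cpow p t = Cmul (Cexp (0, PI * p)) (Rpower (- t) p, 0)).
    { intros t Ht. unfold cpow. destruct (Rlt_dec 0 t); [lra |]. destruct (Rlt_dec t 0); [auto | lra]. }
    assert (L : locally y (fun t => t < 0)) by (apply open_lt; auto).
    assert (Dr : ex_derive (fun t => Rpower (- t) p) y).
    { eexists. apply (is_derive_Rcomp (fun z => Rpower z p) (fun t => - t)).
      - apply is_derive_Rpower_base. lra.
      - auto_derive; auto. }
    split; (eapply continuous_ext_loc; [eapply filter_imp; [| exact L]; intros t Ht; rewrite E by auto; reflexivity |]);
      apply ex_derive_continuous_R; simpl.
    + apply ex_derive_Rminus; [apply ex_derive_Rscal; auto | eexists; auto_derive; auto].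
    + apply ex_derive_Rplus; [eexists; auto_derive; auto | apply ex_derive_Rscal; auto].
  - split; apply continuous_0_of_le_abs; try (intros; apply cpow_le_abs; auto);
      unfold cpow; destruct (Rlt_dec 0 0); try lra; destruct (Rlt_dec 0 0); try lra; reflexivity.
  - assert (L : locally y (fun t => 0 < t)) by (apply open_gt; auto).
    assert (E : forall t, 0 < t -> cpow p t = (Rpower t p, 0))
      by (intros t Ht; unfold cpow; destruct (Rlt_dec 0 t); [auto | lra]).
    split; (eapply continuous_ext_loc; [eapply filter_imp; [| exact L]; intros t Ht; rewrite E by auto; reflexivity |]);
      apply ex_derive_continuous_R; simpl.
    + eexists. apply is_derive_Rpower_base; auto.
    + eexists. auto_derive; auto.
Qed.

Lemma u_p_continuous p y : 1 <= p ->
  continuous (fun t => fst (u_p p t)) y /\ continuous (fun t => snd (u_p p t)) y.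
Proof.
  intros Hp. destruct (cpow_continuous p y Hp) as [C1 C2]. unfold u_p, Cexp, Cmul, Ci. simpl.
  assert (A : continuous (fun t => 0 * fst (cpow p t) - 1 * snd (cpow p t)) y)
    by (apply continuous_Rminus; apply continuous_Rscal; auto).
  assert (B : continuous (fun t => 0 * snd (cpow p t) + 1 * fst (cpow p t)) y)
    by (apply continuous_Rplus; apply continuous_Rscal; auto).
  split; apply continuous_Rmult.
  - apply continuous_exp_comp; auto.
  - apply continuous_cos_comp; auto.
  - apply continuous_exp_comp; auto.
  - apply continuous_sin_comp; auto.
Qed.

(** * The STFT integrand *)

Definition stft_integrand (phi u : R -> Cx) x xi y : Cx :=
  Cmul (Cmul (u y) (Cconj (phi (y - x)))) (Cexp (0, - (y * xi))).

Lemma STFT_Rint (phi u : R -> Cx) x xi :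
  STFT phi u x xi = (Rint (fun y => fst (stft_integrand phi u x xi y)), Rint (fun y => snd (stft_integrand phi u x xi y))).
Proof. reflexivity. Qed.

Lemma stft_integrand_continuous (phi u : R -> Cx) x xi y :
  (forall t, continuous (fun s => fst (phi s)) t) -> (forall t, continuous (fun s => snd (phi s)) t) ->
  continuous (fun s => fst (u s)) y -> continuous (fun s => snd (u s)) y ->
  continuous (fun t => fst (stft_integrand phi u x xi t)) y /\ continuous (fun t => snd (stft_integrand phi u x xi t)) y.
Proof.
  intros P1 P2 U1 U2.
  assert (S1 : continuous (fun t => fst (phi (t - x))) y) by apply (continuous_shift (fun s => fst (phi s))), P1.
  assert (S2 : continuous (fun t => - snd (phi (t - x))) y) by apply continuous_Ropp, (continuous_shift (fun s => snd (phi s))), P2.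
  assert (A : continuous (fun t => - (t * xi)) y).
  { apply continuous_Ropp, continuous_Rmult;
      [apply (continuous_id (U:=R_UniformSpace)) | apply (continuous_const (U:=R_UniformSpace) (V:=R_UniformSpace))]. }
  assert (E1 : continuous (fun t => exp 0 * cos (- (t * xi))) y) by apply continuous_Rscal, continuous_cos_comp, A.
  assert (E2 : continuous (fun t => exp 0 * sin (- (t * xi))) y) by apply continuous_Rscal, continuous_sin_comp, A.
  unfold stft_integrand, Cmul, Cconj, Cexp; simpl.
  split; [apply continuous_Rminus | apply continuous_Rplus]; apply continuous_Rmult; auto;
    first [apply continuous_Rminus | apply continuous_Rplus]; apply continuous_Rmult; auto.
Qed.


Lemma stft_integrand_le (phi u : R -> Cx) x xi y w :
  Rabs (fst (u y)) <= w -> Rabs (snd (u y)) <= w ->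
  Rabs (fst (stft_integrand phi u x xi y)) <= 2 * w * (Rabs (fst (phi (y - x))) + Rabs (snd (phi (y - x)))) /\
  Rabs (snd (stft_integrand phi u x xi y)) <= 2 * w * (Rabs (fst (phi (y - x))) + Rabs (snd (phi (y - x)))).
Proof.
  unfold stft_integrand, Cmul, Cconj, Cexp; simpl. rewrite exp_0, !Rmult_1_l.
  destruct (u y) as [u1 u2], (phi (y - x)) as [p1 p2]; simpl. intros H1 H2.
  assert (Hw : 0 <= w) by (pose proof (Rabs_pos u1); lra).
  assert (Tm : forall a b A B, Rabs a <= A -> Rabs b <= B -> Rabs (a * b) <= A * B).
  { intros a b A B Ha Hb. rewrite Rabs_mult. apply Rmult_le_compat; auto using Rabs_pos. }
  assert (X1 : Rabs (u1 * p1 - u2 * - p2) <= w * (Rabs p1 + Rabs p2)).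
  { eapply Rle_trans; [apply Rabs_triang |]. rewrite Rabs_Ropp.
    pose proof (Tm u1 p1 w (Rabs p1) H1 (Rle_refl _)).
    pose proof (Tm u2 (- p2) w (Rabs p2) H2 ltac:(rewrite Rabs_Ropp; lra)). lra. }
  assert (X2 : Rabs (u1 * - p2 + u2 * p1) <= w * (Rabs p1 + Rabs p2)).
  { eapply Rle_trans; [apply Rabs_triang |].
    pose proof (Tm u2 p1 w (Rabs p1) H2 (Rle_refl _)).
    pose proof (Tm u1 (- p2) w (Rabs p2) H1 ltac:(rewrite Rabs_Ropp; lra)). lra. }
  set (t := - (y * xi)).
  assert (C : Rabs (cos t) <= 1) by (apply Rabs_le, COS_bound).
  assert (S : Rabs (sin t) <= 1) by (apply Rabs_le, SIN_bound).
  pose proof (Tm _ _ _ _ X1 C). pose proof (Tm _ _ _ _ X2 S).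
  pose proof (Tm _ _ _ _ X1 S). pose proof (Tm _ _ _ _ X2 C).
  split; (eapply Rle_trans; [apply Rabs_triang |]); rewrite ?Rabs_Ropp; lra.
Qed.

Lemma stft_integrand_cos_sin (phi u : R -> Cx) x xi y A : u y = (cos A, sin A) ->
  fst (stft_integrand phi u x xi y) = cos (A - y * xi) * fst (phi (y - x)) + sin (A - y * xi) * snd (phi (y - x)) /\
  snd (stft_integrand phi u x xi y) = sin (A - y * xi) * fst (phi (y - x)) - cos (A - y * xi) * snd (phi (y - x)).
Proof.
  unfold stft_integrand. intros ->. destruct (phi (y - x)) as [p1 p2]. unfold Cmul, Cconj, Cexp; simpl.
  rewrite exp_0. replace (A - y * xi) with (A + - (y * xi)) by ring. rewrite cos_plus, sin_plus. split; ring.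
Qed.

Definition win_lo x := Rmin (x / 2) (2 * x).
Definition win_hi x := Rmax (x / 2) (2 * x).

Lemma sqr_one_cases sg : sg * sg = 1 -> sg = 1 \/ sg = -1.
Proof. intros H. assert ((sg - 1) * (sg + 1) = 0) by nra. apply Rmult_integral in H0. lra. Qed.

Lemma Rabs_sg_mult sg x : sg * sg = 1 -> 0 < sg * x -> Rabs x = sg * x.
Proof. intros H Hx. destruct (sqr_one_cases sg H); subst; [rewrite Rabs_right | rewrite Rabs_left]; lra. Qed.

Lemma dyadic_window sg x : sg * sg = 1 -> 0 < sg * x ->
  win_lo x <= win_hi x /\ (forall y, win_lo x <= y <= win_hi x -> Rabs x / 2 <= sg * y <= 2 * Rabs x) /\
  Rabs x / 2 <= Rabs (win_lo x - x) /\ Rabs x / 2 <= Rabs (win_hi x - x) /\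
  (forall y, y <= win_lo x \/ win_hi x <= y -> Rabs x / 2 <= Rabs (y - x)).
Proof.
  intros H1 H2. unfold win_lo, win_hi. destruct (sqr_one_cases sg H1); subst.
  - rewrite Rmin_left, Rmax_right, Rabs_right by lra.
    split; [lra |]. split; [intros; lra |]. split; [rewrite Rabs_left by lra; lra |].
    split; [rewrite Rabs_right by lra; lra |].
    intros y [Hy | Hy]; [rewrite Rabs_left1 by lra | rewrite Rabs_right by lra]; lra.
  - rewrite Rmin_right, Rmax_left, Rabs_left by lra.
    split; [lra |]. split; [intros; lra |]. split; [rewrite Rabs_left by lra; lra |].
    split; [rewrite Rabs_right by lra; lra |].
    intros y [Hy | Hy]; [rewrite Rabs_left by lra | rewrite Rabs_right by lra]; lra.
Qed.

(* The explicit threshold comes from [Rpower r (p - 2) >= 1 + (p - 2) ln r]. *)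
Lemma Rpower_dominates_linear p c r : 2 < p -> 0 <= c ->
  exp ((4 * c / p) / (p - 2)) + 1 <= r -> 2 * c * r <= p / 2 * Rpower r (p - 1).
Proof.
  intros hp hc Hr. set (q := (4 * c / p) / (p - 2)) in *.
  pose proof (exp_pos q).
  assert (Lq : q <= ln r) by (rewrite <- (ln_exp q); apply ln_le; lra).
  assert (E : Rpower r (p - 1) = Rpower r (p - 2) * r).
  { replace (p - 1) with ((p - 2) + 1) by ring. rewrite Rpower_plus, Rpower_1; lra. }
  assert (E2 : 1 + (p - 2) * ln r <= Rpower r (p - 2)) by (unfold Rpower; apply exp_ineq1_le).
  assert (E3 : (p - 2) * q = 4 * c / p) by (unfold q; field; lra).
  assert (E4 : 4 * c / p <= (p - 2) * ln r) by (rewrite <- E3; apply Rmult_le_compat_l; lra).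
  assert (p / 2 * (1 + 4 * c / p) = p / 2 + 2 * c) by (field; lra).
  assert (p / 2 * (1 + 4 * c / p) <= p / 2 * Rpower r (p - 2)) by (apply Rmult_le_compat_l; lra).
  rewrite E. nra.
Qed.

Lemma sum_f_R0_ge_last (f : nat -> R) n : (forall k, 0 <= f k) -> f n <= sum_f_R0 f n.
Proof.
  intros H. assert (P : forall m, 0 <= sum_f_R0 f m).
  { induction m; simpl; [apply H | pose proof (H (S m)); lra]. }
  destruct n; simpl; [lra | pose proof (P n); lra].
Qed.

Lemma pow_le_exp (m : nat) s : 0 < s -> exists C, 0 < C /\ forall z, 0 <= z -> z ^ m <= C * exp (s * z).
Proof.
  intros Hs. assert (Hf : 0 < INR (Factorial.fact m)) by apply lt_0_INR, Factorial.lt_O_fact.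
  exists (INR (Factorial.fact m) / s ^ m). split; [apply Rdiv_lt_0_compat; [auto | apply pow_lt; auto] |].
  intros z Hz. pose proof (pow_lt s m Hs).
  assert (E : (s * z) ^ m / INR (Factorial.fact m) <= exp (s * z)).
  { eapply Rle_trans; [| apply exp_ge_taylor; nra].
    apply (sum_f_R0_ge_last (fun k => (s * z) ^ k / INR (Factorial.fact k))). intros k.
    apply Rmult_le_pos; [apply pow_le; nra | left; apply Rinv_0_lt_compat, lt_0_INR, Factorial.lt_O_fact]. }
  rewrite Rpow_mult_distr in E.
  apply Rmult_le_reg_l with (s ^ m / INR (Factorial.fact m)); [apply Rdiv_lt_0_compat; auto |].
  replace (s ^ m / INR (Factorial.fact m) * (INR (Factorial.fact m) / s ^ m * exp (s * z))) with (exp (s * z)) by (field; lra).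
  replace (s ^ m / INR (Factorial.fact m) * z ^ m) with (s ^ m * z ^ m / INR (Factorial.fact m)) by (field; lra). lra.
Qed.

Lemma Rpower_neg_le X (L : nat) : 1 <= X -> Rpower X (- INR L) <= 2 ^ L / (1 + X) ^ L.
Proof.
  intros H. rewrite Rpower_Ropp, Rpower_pow by lra.
  assert (0 < X ^ L) by (apply pow_lt; lra). assert (0 < (1 + X) ^ L) by (apply pow_lt; lra).
  assert ((1 + X) ^ L <= 2 ^ L * X ^ L) by (rewrite <- Rpow_mult_distr; apply pow_incr; lra).
  apply Rmult_le_reg_r with ((1 + X) ^ L * X ^ L); [nra |].
  replace (/ X ^ L * ((1 + X) ^ L * X ^ L)) with ((1 + X) ^ L) by (field; lra).
  replace (2 ^ L / (1 + X) ^ L * ((1 + X) ^ L * X ^ L)) with (2 ^ L * X ^ L) by (field; lra). lra.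
Qed.

Section Stft_u_p.
Variable p : R.
Hypothesis hp : 2 < p.
Variables (phi : R -> Cx) (D1 D2 : nat -> R -> R).
Hypothesis hD10 : forall y, D1 O y = fst (phi y).
Hypothesis hD20 : forall y, D2 O y = snd (phi y).
Hypothesis hD1 : forall k y, is_derive (D1 k) y (D1 (S k) y).
Hypothesis hD2 : forall k y, is_derive (D2 k) y (D2 (S k) y).
Hypothesis hD1_decay : forall k, rapid_decay (D1 k).
Hypothesis hD2_decay : forall k, rapid_decay (D2 k).

Let re_integrand x xi y := fst (stft_integrand phi (u_p p) x xi y).
Let im_integrand x xi y := snd (stft_integrand phi (u_p p) x xi y).

Lemma stft_integrand_u_p_continuous x xi y :
  continuous (re_integrand x xi) y /\ continuous (im_integrand x xi) y.
Proof.
  assert (Hu := u_p_continuous p y ltac:(lra)).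
  apply (stft_integrand_continuous phi (u_p p) x xi y); [intros t .. | apply Hu | apply Hu].
  - apply (continuous_ext (D1 O)); [exact hD10 |]. apply ex_derive_continuous_R. eexists; apply hD1.
  - apply (continuous_ext (D2 O)); [exact hD20 |]. apply ex_derive_continuous_R. eexists; apply hD2.
Qed.

Lemma re_integrand_continuous x xi y : continuous (re_integrand x xi) y.
Proof. apply stft_integrand_u_p_continuous. Qed.

Lemma im_integrand_continuous x xi y : continuous (im_integrand x xi) y.
Proof. apply stft_integrand_u_p_continuous. Qed.

Definition window_decay sg c := forall L : nat, exists C X1, 1 <= X1 /\ 0 <= C /\ forall x xi,
  0 < sg * x -> Rabs xi <= c * Rabs x -> X1 <= Rabs x ->
  Rabs (RInt (re_integrand x xi) (win_lo x) (win_hi x)) <= C * Rpower (Rabs x) (- INR L) /\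
  Rabs (RInt (im_integrand x xi) (win_lo x) (win_hi x)) <= C * Rpower (Rabs x) (- INR L).

(* Since [sin = cos (. - PI/2)], both parts are oscillatory integrands [cos (phase + s) * ampl]. *)
Lemma stft_integrand_oscillating sg ep x xi y : 0 < sg * y ->
  u_p p y = (cos (ep * Rpower (sg * y) p), sin (ep * Rpower (sg * y) p)) ->
  re_integrand x xi y = cos (phase p sg ep xi y + 0) * ampl p sg ep D1 0 0 0 x xi y
                        + cos (phase p sg ep xi y + - (PI / 2)) * ampl p sg ep D2 0 0 0 x xi y /\
  im_integrand x xi y = cos (phase p sg ep xi y + - (PI / 2)) * ampl p sg ep D1 0 0 0 x xi y
                        - cos (phase p sg ep xi y + 0) * ampl p sg ep D2 0 0 0 x xi y.
Proof.
  intros Hy Hu. destruct (stft_integrand_cos_sin phi (u_p p) x xi y _ Hu) as [E1 E2].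
  unfold re_integrand, im_integrand. rewrite E1, E2.
  unfold ampl. rewrite Rpower_O, hD10, hD20 by auto.
  change (_ + - (PI / 2)) with (phase p sg ep xi y - PI / 2).
  rewrite cos_sub_PI2, Rplus_0_r. unfold phase. split; ring.
Qed.

Lemma window_decay_oscillating sg c ep : sg * sg = 1 -> ep * ep = 1 -> 0 <= c ->
  (forall y, 0 < sg * y -> u_p p y = (cos (ep * Rpower (sg * y) p), sin (ep * Rpower (sg * y) p))) ->
  window_decay sg c.
Proof.
  intros hsg hep hc hu L.
  set (X0 := 2 * exp ((4 * c / p) / (p - 2)) + 2).
  assert (hX0 : 2 <= X0) by (unfold X0; pose proof (exp_pos ((4 * c / p) / (p - 2))); lra).
  assert (hX : forall r, X0 / 2 <= r -> 2 * c * r <= p / 2 * Rpower r (p - 1))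
    by (intros r Hr; apply Rpower_dominates_linear; auto; unfold X0 in Hr; lra).
  destruct (osc_decay_all p sg ep D1 hp hsg hep hD1 c X0 hc hX0 hX hD1_decay (S L) O O 0) as [C1 [HC1 Q1]].
  destruct (osc_decay_all p sg ep D2 hp hsg hep hD2 c X0 hc hX0 hX hD2_decay (S L) O O 0) as [C2 [HC2 Q2]].
  assert (Hexp : 0 - INR 0 * (p - 1) + 1 - INR (S L) = - INR L) by (rewrite S_INR; simpl; ring).
  rewrite Hexp in Q1, Q2. unfold osc_int in Q1, Q2.
  exists (C1 + C2), X0. split; [lra |]. split; [lra |]. intros x xi Hx Hxi HX.
  destruct (dyadic_window sg x hsg Hx) as (K1 & K2 & K3 & K4 & _).
  set (lo := win_lo x) in *. set (hi := win_hi x) in *.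
  assert (Hc : admissible sg c X0 x xi lo hi) by (unfold admissible; tauto).
  assert (Hreg := admissible_regular p sg ep hp hsg hep c X0 hc hX0 hX x xi lo hi Hc).
  assert (Hin : forall y, Rmin lo hi < y < Rmax lo hi -> 0 < sg * y).
  { intros y Hy. rewrite Rmin_left, Rmax_right in Hy by lra. destruct (K2 y); lra. }
  pose (Hform y Hy := stft_integrand_oscillating sg ep x xi y (Hin y Hy) (hu y (Hin y Hy))).
  rewrite (RInt_ext_R _ _ _ _ (fun y Hy => proj1 (Hform y Hy))).
  rewrite (RInt_ext_R _ _ _ _ (fun y Hy => proj2 (Hform y Hy))).
  rewrite RInt_Rplus, RInt_Rminus by (apply ex_RInt_cos_phase_ampl; auto).
  pose proof (Q1 0 x xi lo hi Hc). pose proof (Q1 (- (PI / 2)) x xi lo hi Hc).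
  pose proof (Q2 0 x xi lo hi Hc). pose proof (Q2 (- (PI / 2)) x xi lo hi Hc).
  split; (eapply Rle_trans; [apply Rabs_triang |]); rewrite ?Rabs_Ropp; lra.
Qed.


Lemma phi_lorentzian : exists B, 0 <= B /\ forall t, Rabs (fst (phi t)) + Rabs (snd (phi t)) <= B / (1 + t ^ 2).
Proof.
  destruct (rapid_decay_lorentzian _ (hD1_decay O)) as [B1 [HB1 G1]].
  destruct (rapid_decay_lorentzian _ (hD2_decay O)) as [B2 [HB2 G2]].
  exists (B1 + B2). split; [lra |]. intros t. rewrite <- hD10, <- hD20.
  specialize (G1 t). specialize (G2 t). unfold Rdiv in *. lra.
Qed.

Lemma phi_tail (L : nat) : exists T, 0 <= T /\ forall t X, 0 < X -> X / 2 <= Rabs t ->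
  Rabs (fst (phi t)) + Rabs (snd (phi t)) <= T * Rpower X (- INR L) / (1 + t ^ 2).
Proof.
  destruct (rapid_decay_tail _ (hD1_decay O) L) as [T1 [HT1 G1]].
  destruct (rapid_decay_tail _ (hD2_decay O) L) as [T2 [HT2 G2]].
  exists (T1 + T2). split; [lra |]. intros t X HX Ht. rewrite <- hD10, <- hD20.
  specialize (G1 t X HX Ht). specialize (G2 t X HX Ht). unfold Rdiv in *. lra.
Qed.

Lemma stft_integrand_u_p_le x xi y w b : Rabs (fst (u_p p y)) <= w -> Rabs (snd (u_p p y)) <= w ->
  Rabs (fst (phi (y - x))) + Rabs (snd (phi (y - x))) <= b ->
  Rabs (re_integrand x xi y) <= 2 * w * b /\ Rabs (im_integrand x xi y) <= 2 * w * b.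
Proof.
  intros H1 H2 Hb. assert (0 <= w) by (pose proof (Rabs_pos (fst (u_p p y))); lra).
  destruct (stft_integrand_le phi (u_p p) x xi y w H1 H2). unfold re_integrand, im_integrand. split; nra.
Qed.

Lemma window_decay_damped c : 0 < sin (PI * p) -> window_decay (-1) c.
Proof.
  intros Hs L. set (s := sin (PI * p)) in *.
  destruct phi_lorentzian as [B [HB HphiB]].
  destruct (pow_le_exp (S L) (s / 2) ltac:(lra)) as [C' [HC' PE]].
  exists (3 * B * C'), 2. split; [lra |]. split; [nra |]. intros x xi Hx Hxi HX.
  destruct (dyadic_window (-1) x ltac:(ring) Hx) as (K1 & K2 & _).
  assert (Ax : Rabs x = - x) by (apply Rabs_left; lra).
  assert (Hlen : win_hi x - win_lo x = 3 / 2 * Rabs x)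
    by (unfold win_hi, win_lo; rewrite Rmin_right, Rmax_left by lra; lra).
  set (W := exp (- (s * (Rabs x / 2)))).
  assert (Pt : forall y, win_lo x <= y <= win_hi x ->
    Rabs (re_integrand x xi y) <= 2 * W * B /\ Rabs (im_integrand x xi y) <= 2 * W * B).
  { intros y Hy. destruct (K2 y Hy) as [Y1 Y2].
    assert (Ww : exp (- (s * Rpower (- y) p)) <= W).
    { apply exp_le_compat. assert (Rabs x / 2 <= Rpower (- y) p) by (eapply Rle_trans; [| apply Rpower_ge_self]; lra).
      nra. }
    destruct (u_p_neg_le p y ltac:(lra)) as [U1 U2]. fold s in U1, U2.
    apply stft_integrand_u_p_le; [lra | lra |]. eapply Rle_trans; [apply HphiB | apply lorentzian_le; auto]. }
  assert (Key : Rabs x * W <= C' * Rpower (Rabs x) (- INR L)).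
  { specialize (PE (Rabs x) ltac:(lra)). rewrite Rpower_Ropp, Rpower_pow by lra.
    assert (0 < Rabs x ^ L) by (apply pow_lt; lra).
    assert (EW : W * exp (s / 2 * Rabs x) = 1).
    { unfold W. rewrite <- exp_plus, <- exp_0. f_equal. field. }
    apply Rmult_le_reg_r with (Rabs x ^ L); auto.
    replace (C' * / Rabs x ^ L * Rabs x ^ L) with C' by (field; lra).
    assert (HW : 0 <= W) by (left; apply exp_pos).
    pose proof (Rmult_le_compat_r W _ _ HW PE) as PW. simpl in PW.
    replace (C' * exp (s / 2 * Rabs x) * W) with (C' * (W * exp (s / 2 * Rabs x))) in PW by ring.
    rewrite EW in PW. lra. }
  assert (HWB : 3 / 2 * Rabs x * (2 * W * B) <= 3 * B * C' * Rpower (Rabs x) (- INR L)) by nra.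
  split; (eapply Rle_trans; [apply abs_RInt_le_const; [lra | apply ex_RInt_continuous_R | intros t Ht; apply (Pt t Ht)] |]).
  - apply re_integrand_continuous.
  - rewrite Hlen. lra.
  - apply im_integrand_continuous.
  - rewrite Hlen. lra.
Qed.

Hypothesis hsin : 0 <= sin (PI * p).

Lemma stft_integrand_lorentzian_le : exists B, 0 <= B /\ forall x xi y,
  Rabs (re_integrand x xi y) <= B / (1 + (y - x) ^ 2) /\ Rabs (im_integrand x xi y) <= B / (1 + (y - x) ^ 2).
Proof.
  destruct phi_lorentzian as [B [HB HphiB]]. exists (2 * B). split; [lra |]. intros x xi y.
  pose proof (one_plus_sqr_pos (y - x)).
  replace (2 * B / (1 + (y - x) ^ 2)) with (2 * 1 * (B / (1 + (y - x) ^ 2))) by (field; lra).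
  destruct (u_p_bounded p y hsin). apply stft_integrand_u_p_le; auto.
Qed.

Lemma Rint_stft_bounded : exists B, 0 <= B /\ forall x xi, Rabs (Rint (re_integrand x xi)) <= B /\ Rabs (Rint (im_integrand x xi)) <= B.
Proof.
  destruct stft_integrand_lorentzian_le as [B [HB G]]. exists (8 * B). split; [lra |]. intros x xi.
  assert (H : forall f, (forall y, continuous f y) -> (forall y, Rabs (f y) <= B / (1 + (y - x) ^ 2)) ->
    Rabs (Rint f) <= 8 * B).
  { intros f Hf Hb. pose proof (Rint_sub_RInt_le f x B B x x Hf (Rle_refl x) HB Hb (fun y _ => Hb y)) as K.
    rewrite RInt_point in K. change zero with 0 in K. rewrite Rminus_0_r in K. exact K. }
  split; apply H; intros y; [apply re_integrand_continuous | apply G | apply im_integrand_continuous | apply G].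
Qed.

(* Outside the dyadic window [|y - x| >= |x|/2], so the decay of [phi] makes the
   tails of the integral [O(|x|^(-L))]. *)
Lemma Rint_stft_near_window sg (L : nat) : sg * sg = 1 -> exists T, 0 <= T /\ forall x xi, 0 < sg * x ->
  Rabs (Rint (re_integrand x xi) - RInt (re_integrand x xi) (win_lo x) (win_hi x)) <= T * Rpower (Rabs x) (- INR L) /\
  Rabs (Rint (im_integrand x xi) - RInt (im_integrand x xi) (win_lo x) (win_hi x)) <= T * Rpower (Rabs x) (- INR L).
Proof.
  intros hsg. destruct stft_integrand_lorentzian_le as [B [HB G]]. destruct (phi_tail L) as [T [HT GT]].
  exists (16 * T). split; [lra |]. intros x xi Hx.
  destruct (dyadic_window sg x hsg Hx) as (K1 & _ & _ & _ & K5).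
  assert (Hxa : 0 < Rabs x) by (rewrite (Rabs_sg_mult sg x); lra).
  set (E := 2 * T * Rpower (Rabs x) (- INR L)).
  assert (HE : 0 <= E) by (unfold E; pose proof (Rpower_gt_0 (Rabs x) (- INR L)); nra).
  assert (TB : forall y, y <= win_lo x \/ win_hi x <= y ->
    Rabs (re_integrand x xi y) <= E / (1 + (y - x) ^ 2) /\ Rabs (im_integrand x xi y) <= E / (1 + (y - x) ^ 2)).
  { intros y Hy. pose proof (one_plus_sqr_pos (y - x)).
    replace (E / (1 + (y - x) ^ 2)) with (2 * 1 * (T * Rpower (Rabs x) (- INR L) / (1 + (y - x) ^ 2)))
      by (unfold E; field; lra).
    destruct (u_p_bounded p y hsin). apply stft_integrand_u_p_le; auto. }
  replace (16 * T * Rpower (Rabs x) (- INR L)) with (8 * E) by (unfold E; ring).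
  split; apply (Rint_sub_RInt_le _ x B E); auto using re_integrand_continuous, im_integrand_continuous;
    intros y; [apply G | apply TB | apply G | apply TB].
Qed.

Lemma stft_half_line_decay sg c : sg * sg = 1 -> window_decay sg c -> forall L : nat, exists C, 0 <= C /\
  forall x xi, 0 < sg * x -> Rabs xi <= c * Rabs x ->
  Rabs (Rint (re_integrand x xi)) <= C / (1 + Rabs x) ^ L /\ Rabs (Rint (im_integrand x xi)) <= C / (1 + Rabs x) ^ L.
Proof.
  intros hsg HW L.
  destruct (HW L) as [Cm [X1 [HX1 [HCm HM]]]].
  destruct (Rint_stft_near_window sg L hsg) as [T [HT HN]].
  destruct Rint_stft_bounded as [B [HB HBd]].
  set (C := (Cm + T) * 2 ^ L + B * (1 + X1) ^ L).
  assert (HC1 : 0 <= (Cm + T) * 2 ^ L) by (apply Rmult_le_pos; [lra | apply pow_le; lra]).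
  assert (HC2 : 0 <= B * (1 + X1) ^ L) by (apply Rmult_le_pos; [lra | apply pow_le; lra]).
  exists C. split; [unfold C; lra |]. intros x xi Hx Hxi.
  assert (Hxa : 0 < Rabs x) by (rewrite (Rabs_sg_mult sg x); lra).
  assert (Hq : 0 < (1 + Rabs x) ^ L) by (apply pow_lt; lra).
  destruct (Rle_lt_dec X1 (Rabs x)) as [Hbig | Hsmall].
  - set (P := Rpower (Rabs x) (- INR L)).
    assert (HP : (Cm + T) * P <= C / (1 + Rabs x) ^ L).
    { apply Rle_trans with ((Cm + T) * 2 ^ L / (1 + Rabs x) ^ L).
      - unfold Rdiv. rewrite Rmult_assoc. apply Rmult_le_compat_l; [lra | apply Rpower_neg_le; lra].
      - unfold C, Rdiv. pose proof (Rinv_0_lt_compat _ Hq). nra. }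
    destruct (HM x xi Hx Hxi Hbig) as [M1 M2]. destruct (HN x xi Hx) as [N1 N2]. fold P in M1, M2, N1, N2.
    pose proof (Rabs_triang_inv (Rint (re_integrand x xi)) (RInt (re_integrand x xi) (win_lo x) (win_hi x))).
    pose proof (Rabs_triang_inv (Rint (im_integrand x xi)) (RInt (im_integrand x xi) (win_lo x) (win_hi x))).
    split; lra.
  - assert (HP : B <= C / (1 + Rabs x) ^ L).
    { apply Rle_trans with (B * (1 + X1) ^ L / (1 + Rabs x) ^ L).
      - apply Rmult_le_reg_r with ((1 + Rabs x) ^ L); auto.
        replace (B * (1 + X1) ^ L / (1 + Rabs x) ^ L * (1 + Rabs x) ^ L) with (B * (1 + X1) ^ L) by (field; lra).
        apply Rmult_le_compat_l; [lra | apply pow_incr; lra].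
      - unfold C, Rdiv. pose proof (Rinv_0_lt_compat _ Hq). nra. }
    destruct (HBd x xi). split; lra.
Qed.

(* For [x < 0] the symbol is damped when [sin (PI p) > 0], and it is again a pure
   oscillation [exp (± i |y|^p)] when [sin (PI p) = 0]. *)
Lemma window_decay_u_p sg c : sg = 1 \/ sg = -1 -> 0 <= c -> window_decay sg c.
Proof.
  intros [-> | ->] hc.
  - apply (window_decay_oscillating 1 c 1); try ring; auto.
    intros y Hy. rewrite !Rmult_1_l. apply u_p_pos. lra.
  - destruct hsin as [Hs | Hs]; [apply window_decay_damped; auto |].
    apply (window_decay_oscillating (-1) c (cos (PI * p))); try ring; auto.
    + pose proof (sin2_cos2 (PI * p)). rewrite <- Hs in H. unfold Rsqr in H. lra.
    + intros y Hy. rewrite u_p_neg, <- Hs by lra.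
      replace (-1 * y) with (- y) by ring. rewrite Rmult_0_l, Ropp_0, exp_0, !Rmult_1_l. reflexivity.
Qed.

End Stft_u_p.

(** * The cone around a point off the frequency axis *)

Lemma Rabs_lt_of_sqr_sum_lt a b e : 0 < e -> a ^ 2 + b ^ 2 < e ^ 2 -> Rabs a < e.
Proof. intros He H. pose proof (pow2_ge_0 b). unfold Rabs; destruct (Rcase_abs a); nra. Qed.

Lemma open_conic_half_cone sg c : sg * sg = 1 -> 0 <= c ->
  open_conic (fun x xi => 0 < sg * x /\ Rabs xi < c * (sg * x)).
Proof.
  intros hsg hc. split; [| split].
  - intros x xi [Hx _] E. injection E as -> ->. lra.
  - intros x xi [Hx Hxi]. set (e := Rmin (sg * x) ((c * (sg * x) - Rabs xi) / (1 + c))).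
    assert (He2 : e * (1 + c) <= c * (sg * x) - Rabs xi).
    { unfold e. apply Rle_trans with ((c * (sg * x) - Rabs xi) / (1 + c) * (1 + c)); [| right; field; lra].
      apply Rmult_le_compat_r; [lra | apply Rmin_r]. }
    assert (He1 : e <= sg * x) by apply Rmin_l.
    assert (He : 0 < e) by (apply Rmin_pos; [| apply Rdiv_lt_0_compat]; lra).
    exists e. split; auto. intros y eta Hd.
    assert (A1 : Rabs (y - x) < e) by (apply Rabs_lt_of_sqr_sum_lt with (eta - xi); auto).
    assert (A2 : Rabs (eta - xi) < e) by (apply Rabs_lt_of_sqr_sum_lt with (y - x); lra).
    assert (A3 : Rabs (sg * y - sg * x) < e)
      by (replace (sg * y - sg * x) with (sg * (y - x)) by ring; rewrite Rabs_mult, (Rabs_sqr_one sg hsg); lra).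
    apply Rabs_def2 in A3. pose proof (Rabs_triang_inv eta xi). split; nra.
  - intros x xi t [Hx Hxi] Ht. split; [nra |]. rewrite Rabs_mult, (Rabs_right t) by lra. nra.
Qed.

Lemma japan_le_cone x xi c : 0 <= c -> Rabs xi <= c * Rabs x -> japan x xi <= (1 + c) * (1 + Rabs x).
Proof.
  intros hc Hxi. pose proof (Rabs_pos x). pose proof (Rabs_pos xi). unfold japan.
  rewrite <- (sqrt_square ((1 + c) * (1 + Rabs x))) by nra. apply sqrt_le_1_alt.
  rewrite <- (pow2_abs x), <- (pow2_abs xi). nra.
Qed.

Lemma japan_ge_1 x xi : 1 <= japan x xi.
Proof.
  unfold japan. rewrite <- sqrt_1 at 1. apply sqrt_le_1_alt.
  pose proof (pow2_ge_0 x). pose proof (pow2_ge_0 xi). lra.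
Qed.

Lemma Cnorm_le_Rabs a b : Cnorm (a, b) <= Rabs a + Rabs b.
Proof.
  unfold Cnorm; cbn [fst snd]. pose proof (Rabs_pos a). pose proof (Rabs_pos b).
  rewrite <- (sqrt_square (Rabs a + Rabs b)) by lra. apply sqrt_le_1_alt.
  rewrite <- (pow2_abs a), <- (pow2_abs b). nra.
Qed.

Lemma STFT_u_p_decay_in_cone p phi sg c : 2 < p -> 0 <= sin (PI * p) -> is_schwartz phi ->
  sg = 1 \/ sg = -1 -> 0 <= c -> forall N, 0 <= N -> exists K, forall x xi,
  0 < sg * x -> Rabs xi <= c * Rabs x -> Rpower (japan x xi) N * Cnorm (STFT phi (u_p p) x xi) <= K.
Proof.
  intros hp hsin [S1 S2] Hsg hc N HN.
  assert (hsg : sg * sg = 1) by (destruct Hsg; subst; ring).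
  destruct (schwartz_R_derivatives _ S1) as [D1 [hD10 [hD1 hD1_decay]]].
  destruct (schwartz_R_derivatives _ S2) as [D2 [hD20 [hD2 hD2_decay]]].
  destruct (nfloor_ex N HN) as [m [Hm1 Hm2]]. set (L := S m).
  assert (HL : N <= INR L) by (unfold L; rewrite S_INR; lra).
  destruct (stft_half_line_decay p hp phi D1 D2 hD10 hD20 hD1 hD2 hD1_decay hD2_decay hsin sg c hsg
    (window_decay_u_p p hp phi D1 D2 hD10 hD20 hD1 hD2 hD1_decay hD2_decay hsin sg c Hsg hc) L) as [C [HC HD]].
  exists ((1 + c) ^ L * (2 * C)). intros x xi Hx Hxi. destruct (HD x xi Hx Hxi) as [B1 B2].
  pose proof (Cnorm_le_Rabs (Rint (fun y => fst (stft_integrand phi (u_p p) x xi y)))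
    (Rint (fun y => snd (stft_integrand phi (u_p p) x xi y)))) as CN. rewrite <- STFT_Rint in CN.
  pose proof (japan_ge_1 x xi). pose proof (japan_le_cone x xi c hc Hxi). pose proof (Rabs_pos x).
  assert (P1 : Rpower (japan x xi) N <= ((1 + c) * (1 + Rabs x)) ^ L).
  { apply Rle_trans with (Rpower ((1 + c) * (1 + Rabs x)) N); [apply Rle_Rpower_l; lra |].
    rewrite <- Rpower_pow by nra. apply Rle_Rpower; [nra | auto]. }
  assert (Hq : 0 < (1 + Rabs x) ^ L) by (apply pow_lt; lra).
  assert (HV : Cnorm (STFT phi (u_p p) x xi) <= 2 * C / (1 + Rabs x) ^ L) by (unfold Rdiv in *; lra).
  assert (0 <= Cnorm (STFT phi (u_p p) x xi)) by apply sqrt_pos.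
  eapply Rle_trans; [apply Rmult_le_compat; [left; apply Rpower_gt_0 | auto | exact P1 | exact HV] |].
  rewrite Rpow_mult_distr. right. field. lra.
Qed.

Theorem proposition8p2 (p : R) (n : nat)
  (hp : 2 < p) (hn1 : 2 * INR n <= p) (hn2 : p <= 2 * INR n + 1)
  (phi : R -> Cx) (hphi : is_schwartz phi) (hphi0 : exists x, phi x <> C0)
  (x0 xi0 : R) :
  in_WF phi (u_p p) x0 xi0 -> x0 = 0 /\ xi0 <> 0.
Proof.
  intros [Hne Hno]. destruct (Req_dec x0 0) as [-> | Hx0].
  { split; auto. intros ->. apply Hne; reflexivity. }
  exfalso. apply Hno.
  assert (Hsg : exists sg, (sg = 1 \/ sg = -1) /\ 0 < sg * x0)
    by (destruct (Rlt_dec 0 x0); [exists 1 | exists (-1)]; split; auto; lra).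
  destruct Hsg as [sg [Hsg Hsx]]. assert (hsg : sg * sg = 1) by (destruct Hsg; subst; ring).
  set (c := Rabs xi0 / Rabs x0 + 1).
  assert (Hxa : Rabs x0 = sg * x0) by (apply Rabs_sg_mult; auto).
  assert (hc : Rabs xi0 < c * (sg * x0)) by (rewrite <- Hxa; unfold c; field_simplify; [lra | lra]).
  assert (c0 : 0 <= c).
  { unfold c. pose proof (Rabs_pos xi0). pose proof (Rinv_0_lt_compat _ (Rabs_pos_lt x0 Hx0)).
    unfold Rdiv. nra. }
  exists (fun x xi => 0 < sg * x /\ Rabs xi < c * (sg * x)).
  split; [apply open_conic_half_cone; auto | split; [auto |]].
  intros N HN.
  destruct (STFT_u_p_decay_in_cone p phi sg c hp (sin_PI_mul_nonneg p n ltac:(lra)) hphi Hsg c0 N HN) as [K HK].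
  exists K. intros x xi [Hx Hxi]. apply HK; auto. rewrite (Rabs_sg_mult sg x); lra.
Qed.
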